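(* Let $0=t_0<t_1<\cdots<t_N=T$ be a time grid with steps $\tau_k=t_k-t_{k-1}$ ($1\le k\le N$), maximal step $\tau=\max_{1\le k\le N}\tau_k$ and ratios $r_k=\tau_k/\tau_{k-1}$ ($2\le k\le N$). Let $r_{\max}=\frac16\big(\sqrt[3]{1196-12\sqrt{177}}+\sqrt[3]{1196+12\sqrt{177}}\big)+\frac43\approx 4.8645$ be the positive root of $x^3=(2x+1)^2$, fix $\delta\in(0,r_{\max})$, and assume $r_2>0$ and $0<r_k\le r_{\max}-\delta$ for $3\le k\le N$. Let $M\ge 2$, $h=(x_r-x_l)/M$, $x_i=x_l+ih$, and let $\mathcal V_h$ be the set of grid functions $v=(v_0,\dots,v_M)$ with $v_0=v_M=0$, with $\Delta_h v_i=(v_{i+1}-2v_i+v_{i-1})/h^2$, $\nabla_h v_i=(v_{i+1}-v_{i-1})/(2h)$ for $1\le i\le M-1$, $\langle u,v\rangle=\sum_{i=1}^{M-1}h u_iv_i$, $\|u\|=\sqrt{\langle u,u\rangle}$, $|u|_1=\sqrt{\langle -\Delta_h u,u\rangle}$. Let $c_1>0$, $c_2,c_3\in\mathbb R$, let $\mathcal J_h$ be a linear operator on grid functions (the composite trapezoidal discretization $\mathcal J_h(v)_i=\frac h2\big(v_0\rho(x_0-x_i)+2\sum_{j=1}^{M-1}v_j\rho(x_j-x_i)+v_M\rho(x_M-x_i)\big)$ of the nonlocal integral operator with a bounded kernel $\rho$), and let $C_J>0$ satisfy $\|\mathcal J_h(v)\|\le C_J\|v\|$ for all $v\in\mathcal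 V_h$. Suppose $\phi^n\in\mathcal V_h$ ($0\le n\le N$) and grid functions $\zeta^n$ ($1\le n\le N$) satisfy, at all interior points $x_i$, $1\le i\le M-1$, $$\sum_{k=1}^n b^{(n)}_{n-k}(\phi^k-\phi^{k-1})-c_1\Delta_h\phi^n+c_2\nabla_h\phi^n+c_3\phi^n+\mathcal J_h(E\phi^{n-1})=\zeta^n,\qquad 1\le n\le N,$$ where $E\phi^{n-1}=(1+r_n)\phi^{n-1}-r_n\phi^{n-2}$ for $n\ge2$ and $E\phi^0=\phi^0$. Set $C_r=\sqrt{r_{\max}}/(1+r_{\max})^2$, $c_r=r_{\max}^{5/2}$, $$C_1=\frac{c_2^2}{c_1C_r\delta}+2|c_3|+2C_J(1+2r_{\max}),\qquad C_2=\frac{4c_r}{\delta}\sqrt{c_1r_2}.$$ If $$\tau\le\min\Big\{\frac1{2C_1},\ \frac1{2(c_2^2/c_1+4|c_3|+2C_J)},\ \frac1{4(5C_J+4|c_3|)}\Big\},$$ then for $n\ge2$ $$\|\phi^n\|\le 2\exp(2C_1t_{n-1})\Big((3+r_2)\|\phi^0\|+7\sum_{k=1}^n p^{(n)}_{n-k}\|\zeta^k\|+6p^{(n)}_{n-2}C_J(\tau_1+\tau_2)\|\zeta^1\|+C_2\sqrt\tau\,|\phi^0|_1\Big)$$ $$\le 2\exp(2C_1t_{n-1})\Big((3+r_2)\|\phi^0\|+7t_n\max_{1\le k\le n}\|\zeta^k\|+6p^{(n)}_{n-2}C_J(\tau_1+\tau_2)\|\zeta^1\|+C_2\sqrt\tau\,|\phi^0|_1\Big),$$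 and moreover $\|\phi^1\|\le 2\|\phi^0\|+3t_1\|\zeta^1\|$.
   Context: BDF2 kernels: $b^{(1)}_0=1/\tau_1$; for $n\ge2$, $b^{(n)}_0=\frac{1+2r_n}{\tau_n(1+r_n)}$, $b^{(n)}_1=-\frac{r_n^2}{\tau_n(1+r_n)}$, $b^{(n)}_j=0$ for $2\le j\le n-1$. The discrete complementary convolution (DCC) kernels $p^{(n)}_{n-j}$ ($1\le j\le n$) are defined by $\sum_{j=k}^n p^{(n)}_{n-j}b^{(j)}_{j-k}=1$ for all $1\le k\le n$, $1\le n\le N$. *)

From Stdlib Require Import Reals Lra Lia List.
Open Scope R_scope.

(* sum_{i=lo}^{hi} f i  (empty, = 0, if hi < lo) *)
Definition sumR (lo hi : nat) (f : nat -> R) : R :=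
  fold_right Rplus 0 (map f (seq lo (S hi - lo))).

(* max_{lo <= i <= hi} f i  (for lo <= hi) *)
Definition maxR (lo hi : nat) (f : nat -> R) : R :=
  fold_right Rmax (f lo) (map f (seq lo (S hi - lo))).

Definition tau (t : nat -> R) (k : nat) : R := t k - t (k - 1)%nat.
Definition ratio (t : nat -> R) (k : nat) : R := tau t k / tau t (k - 1)%nat.
Definition taumax (t : nat -> R) (N : nat) : R := maxR 1 N (tau t).

Definition bdf2 (t : nat -> R) (n j : nat) : R :=
  if Nat.eqb n 1 then (if Nat.eqb j 0 then 1 / tau t 1 else 0)
  else if Nat.eqb j 0 then (1 + 2 * ratio t n) / (tau t n * (1 + ratio t n))
  else if Nat.eqb j 1 then - (ratio t n ^ 2) / (tau t n * (1 + ratio t n))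
  else 0.

(* p is the family of DCC kernels p^{(n)}_{n-j} (written p n (n-j)) *)
Definition is_DCC (t : nat -> R) (N : nat) (p : nat -> nat -> R) : Prop :=
  forall n k : nat, (1 <= n <= N)%nat -> (1 <= k <= n)%nat ->
    sumR k n (fun j => p n (n - j)%nat * bdf2 t j (j - k)%nat) = 1.

Definition hstep (xl xr : R) (M : nat) : R := (xr - xl) / INR M.
Definition xgrid (xl xr : R) (M : nat) (i : nat) : R := xl + INR i * hstep xl xr M.

Definition in_Vh (M : nat) (v : nat -> R) : Prop := v 0%nat = 0 /\ v M = 0.

Definition lapl (h : R) (v : nat -> R) (i : nat) : R :=
  (v (S i) - 2 * v i + v (i - 1)%nat) / h ^ 2.
Definition grad (h : R) (v : nat -> R) (i : nat) : R :=
  (v (S i) - v (i - 1)%nat) / (2 * h).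

Definition ip (h : R) (M : nat) (u v : nat -> R) : R :=
  sumR 1 (M - 1) (fun i => h * u i * v i).
Definition nrm (h : R) (M : nat) (u : nat -> R) : R := sqrt (ip h M u u).
Definition semi1 (h : R) (M : nat) (u : nat -> R) : R :=
  sqrt (ip h M (fun i => - lapl h u i) u).

Definition Jh (rho : R -> R) (xl xr : R) (M : nat) (v : nat -> R) (i : nat) : R :=
  let h := hstep xl xr M in
  let x := xgrid xl xr M in
  h / 2 * (v 0%nat * rho (x 0%nat - x i)
           + 2 * sumR 1 (M - 1) (fun j => v j * rho (x j - x i))
           + v M * rho (x M - x i)).

Definition Ephi (t : nat -> R) (phi : nat -> nat -> R) (n : nat) (i : nat) : R :=
  if Nat.leb n 1 then phi 0%nat i
  else (1 + ratio t n) * phi (n - 1)%nat i - ratio t n * phi (n - 2)%nat i.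

(* Let [psi k] solve the bidiagonal BDF2 system with data [phi], i.e.
   [phi k = b0 * psi k + b1 * psi (k - 1)].  Inverting the BDF2 operator turns the
   scheme into [phi k - phi (k - 1) = F k + c1 Δ psi k - c2 ∇ psi k - c3 psi k],
   where [F] is the inverted source [zeta - J (E phi)].  Testing with [phi k] and
   summing telescopes the left side into [|phi m|^2 - |phi 0|^2], while the
   diffusion term produces the BDF2 quadratic form in [y k = |psi k|_1].  Since
   [r k <= rmax - delta] for [k >= 3], Young's inequality shows that this form
   dominates [mu * sum_k y k ^ 2 / tau k] up to a start-up defect
   [nu * y 1 ^ 2 / tau 1] (nothing is assumed on [r 2]), and the coercive part
   absorbs the convection term.  A level argument on the running maximum of
   [|phi k|] and the discrete Gronwall inequality then bound [|phi n|].  The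
   column sums of the inverse BDF2 matrix are the DCC kernels, which turns the
   convolved sources into [sum_k p^(n)_(n-k) |zeta k|]; the start-up terms are
   controlled by L2 and H1 estimates of the first step. *)

From Stdlib Require Import Reals Lra Lia List Psatz.
Open Scope R_scope.

Lemma fold_Rplus_init (l : list R) (x : R) :
  fold_right Rplus x l = fold_right Rplus 0 l + x.
Proof. induction l as [|a l IH]; simpl; [lra | rewrite IH; lra]. Qed.

Lemma sumR_recr k n f : (k <= S n)%nat -> sumR k (S n) f = sumR k n f + f (S n).
Proof.
  intros Hk. unfold sumR.
  replace (S (S n) - k)%nat with (S (S n - k)) by lia.
  rewrite seq_S. replace (k + (S n - k))%nat with (S n) by lia.
  rewrite map_app, fold_right_app. simpl. rewrite fold_Rplus_init. lra.
Qed.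

Lemma sumR_recl k n f : (k <= n)%nat -> sumR k n f = f k + sumR (S k) n f.
Proof. intros. unfold sumR. replace (S n - k)%nat with (S (S n - S k)) by lia. reflexivity. Qed.

Lemma sumR_empty k n f : (n < k)%nat -> sumR k n f = 0.
Proof. intros. unfold sumR. replace (S n - k)%nat with 0%nat by lia. reflexivity. Qed.

Lemma sumR_le k n f g :
  (forall i, (k <= i <= n)%nat -> f i <= g i) -> sumR k n f <= sumR k n g.
Proof.
  intros Hfg. unfold sumR.
  assert (Hin : forall i, In i (seq k (S n - k)) -> f i <= g i)
    by (intros i Hi; apply in_seq in Hi; apply Hfg; lia).
  induction (seq k (S n - k)) as [|i l IH]; simpl; [lra|].
  specialize (IH (fun j Hj => Hin j (or_intror Hj))).
  specialize (Hin i (or_introl eq_refl)). lra.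
Qed.

Lemma sumR_ext k n f g :
  (forall i, (k <= i <= n)%nat -> f i = g i) -> sumR k n f = sumR k n g.
Proof.
  intros Hfg. apply Rle_antisym; apply sumR_le; intros i Hi; rewrite Hfg by exact Hi; lra.
Qed.

Lemma sumR_plus k n f g : sumR k n (fun i => f i + g i) = sumR k n f + sumR k n g.
Proof. unfold sumR. induction (seq k (S n - k)); simpl; lra. Qed.

Lemma sumR_scal k n c f : sumR k n (fun i => c * f i) = c * sumR k n f.
Proof. unfold sumR. induction (seq k (S n - k)); simpl; lra. Qed.

Lemma sumR_nonneg k n f : (forall i, (k <= i <= n)%nat -> 0 <= f i) -> 0 <= sumR k n f.
Proof.
  intros Hf. replace 0 with (sumR k n (fun _ => 0)) by (unfold sumR; induction (seq k (S n - k)); simpl; lra).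
  now apply sumR_le.
Qed.

Lemma sumR_zero k n f : (forall i, (k <= i <= n)%nat -> f i = 0) -> sumR k n f = 0.
Proof.
  intros Hf. rewrite (sumR_ext k n f (fun i => 0 * f i)) by (intros i Hi; rewrite (Hf i Hi); lra).
  rewrite sumR_scal. lra.
Qed.

Lemma sumR_le_upper f m n :
  (m <= n)%nat -> (forall i, (1 <= i <= n)%nat -> 0 <= f i) -> sumR 1 m f <= sumR 1 n f.
Proof.
  intros Hmn. induction Hmn as [|n Hmn IH]; intros Hf; [lra|].
  rewrite sumR_recr by lia. pose proof (Hf (S n) ltac:(lia)).
  assert (sumR 1 m f <= sumR 1 n f) by (apply IH; intros; apply Hf; lia). lra.
Qed.

Lemma discriminant_le a b c :
  0 <= a -> 0 <= c -> (forall x, 0 <= a + 2 * x * b + x * x * c) -> b * b <= a * c.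
Proof.
  intros Ha Hc H.
  destruct (Rlt_or_le 0 c) as [Hc'|Hc'].
  - specialize (H (- b / c)).
    replace (a + 2 * (- b / c) * b + (- b / c) * (- b / c) * c) with ((a * c - b * b) / c) in H
      by (field; lra).
    apply Rmult_le_compat_r with (r := c) in H; [|lra].
    unfold Rdiv in H. rewrite Rmult_assoc, Rinv_l in H by lra. lra.
  - assert (c = 0) by lra. subst c.
    destruct (Req_dec b 0) as [->|Hb]; [lra|].
    specialize (H (- (a + 1) / (2 * b))).
    replace (a + 2 * (- (a + 1) / (2 * b)) * b + - (a + 1) / (2 * b) * (- (a + 1) / (2 * b)) * 0)
      with (-1) in H by (field; auto).
    lra.
Qed.

Lemma Cauchy_Schwarz_bilinear (P : (nat -> R) -> Prop) (B : (nat -> R) -> (nat -> R) -> R) :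
  (forall a b u v, P u -> P v -> P (fun i => a * u i + b * v i)) ->
  (forall a b u v w, P u -> P v -> P w ->
     B (fun i => a * u i + b * v i) w = a * B u w + b * B v w) ->
  (forall u v, P u -> P v -> B u v = B v u) ->
  (forall u, P u -> 0 <= B u u) ->
  forall u v, P u -> P v -> Rabs (B u v) <= sqrt (B u u) * sqrt (B v v).
Proof.
  intros Hcomb Hlin Hsym Hpos u v Hu Hv.
  rewrite <- sqrt_mult by auto. rewrite <- sqrt_Rsqr_abs. apply sqrt_le_1_alt. unfold Rsqr.
  apply discriminant_le; auto. intros x.
  pose proof (Hcomb 1 x u v Hu Hv) as Hw.
  pose proof (Hpos _ Hw) as H.
  rewrite Hlin, (Hsym u), (Hsym v), !Hlin, (Hsym v u) in H by auto. nra.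
Qed.

Lemma sumR_shift_average (e : nat -> R) K :
  sumR 1 K (fun i => (e i * e i + e (i - 1)%nat * e (i - 1)%nat) / 2)
  + (e 0%nat * e 0%nat + e K * e K) / 2 = sumR 0 K (fun i => e i * e i).
Proof.
  induction K.
  - rewrite sumR_empty by lia. unfold sumR. simpl. lra.
  - rewrite !sumR_recr by lia. replace (S K - 1)%nat with K by lia. lra.
Qed.

Definition aform (h : R) (M : nat) (u v : nat -> R) : R := ip h M (fun i => - lapl h u i) v.

Lemma in_Vh_lin M a b u v :
  in_Vh M u -> in_Vh M v -> in_Vh M (fun i => a * u i + b * v i).
Proof. intros [Hu0 HuM] [Hv0 HvM]. split; simpl; rewrite ?Hu0, ?HuM, ?Hv0, ?HvM; ring. Qed.

Section GridFunctions.
Variables (h : R) (M : nat).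
Hypothesis Hh : 0 < h.

Lemma ip_ext u u' v v' :
  (forall i, (1 <= i <= M - 1)%nat -> u i = u' i /\ v i = v' i) -> ip h M u v = ip h M u' v'.
Proof. intros H. unfold ip. apply sumR_ext. intros i Hi. now destruct (H i Hi) as [-> ->]. Qed.

Lemma ip_lin a b u v w :
  ip h M (fun i => a * u i + b * v i) w = a * ip h M u w + b * ip h M v w.
Proof. unfold ip. rewrite <- !sumR_scal, <- sumR_plus. apply sumR_ext. intros. ring. Qed.

Lemma ip_combination u1 u2 u3 u4 a b c w :
  ip h M (fun i => u1 i + a * u2 i - b * u3 i - c * u4 i) w
  = ip h M u1 w + a * ip h M u2 w - b * ip h M u3 w - c * ip h M u4 w.
Proof.
  unfold ip.
  rewrite (sumR_ext _ _ _ (fun i => h * u1 i * w i + (a * (h * u2 i * w i)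
             + ((- b) * (h * u3 i * w i) + (- c) * (h * u4 i * w i))))) by (intros; ring).
  rewrite !sumR_plus, !sumR_scal. ring.
Qed.

Lemma ip_scal a u w : ip h M (fun i => a * u i) w = a * ip h M u w.
Proof. unfold ip. rewrite <- sumR_scal. apply sumR_ext. intros. ring. Qed.

Lemma ip_sym u v : ip h M u v = ip h M v u.
Proof. unfold ip. apply sumR_ext. intros. ring. Qed.

Lemma ip_lin_r u a b v w :
  ip h M u (fun i => a * v i + b * w i) = a * ip h M u v + b * ip h M u w.
Proof. rewrite ip_sym, ip_lin, !(ip_sym u). ring. Qed.

Lemma ip_nonneg u : 0 <= ip h M u u.
Proof.
  unfold ip. apply sumR_nonneg. intros. rewrite Rmult_assoc.
  apply Rmult_le_pos; [lra | apply Rle_0_sqr].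
Qed.

Lemma nrm_nonneg u : 0 <= nrm h M u.
Proof. apply sqrt_pos. Qed.

Lemma nrm_sqr u : nrm h M u * nrm h M u = ip h M u u.
Proof. apply sqrt_sqrt, ip_nonneg. Qed.

Lemma nrm_ext u u' : (forall i, (1 <= i <= M - 1)%nat -> u i = u' i) -> nrm h M u = nrm h M u'.
Proof. intros H. unfold nrm. f_equal. apply ip_ext. intros. auto. Qed.

Lemma nrm_zero : nrm h M (fun _ => 0) = 0.
Proof. unfold nrm, ip. rewrite sumR_zero by (intros; ring). apply sqrt_0. Qed.

Lemma Rabs_ip_le u v : Rabs (ip h M u v) <= nrm h M u * nrm h M v.
Proof.
  apply (Cauchy_Schwarz_bilinear (fun _ => True)); auto.
  - intros. apply ip_lin.
  - intros. apply ip_sym.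
  - intros. apply ip_nonneg.
Qed.

Lemma ip_le u v : ip h M u v <= nrm h M u * nrm h M v.
Proof. pose proof (Rabs_ip_le u v). pose proof (Rle_abs (ip h M u v)). lra. Qed.

Lemma nrm_lin_le a b u v :
  nrm h M (fun i => a * u i + b * v i) <= Rabs a * nrm h M u + Rabs b * nrm h M v.
Proof.
  pose proof (nrm_nonneg u). pose proof (nrm_nonneg v).
  pose proof (Rabs_pos a). pose proof (Rabs_pos b).
  unfold nrm at 1. rewrite <- (sqrt_Rsqr (Rabs a * nrm h M u + Rabs b * nrm h M v)) by nra.
  apply sqrt_le_1_alt. unfold Rsqr.
  rewrite ip_lin, !ip_lin_r, (ip_sym v u), <- !nrm_sqr.
  assert (a * b * ip h M u v <= Rabs a * Rabs b * (nrm h M u * nrm h M v)).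
  { rewrite <- Rabs_mult. eapply Rle_trans; [apply Rle_abs|].
    rewrite Rabs_mult. apply Rmult_le_compat_l; [apply Rabs_pos | apply Rabs_ip_le]. }
  assert (a * a = Rabs a * Rabs a) by (rewrite <- Rabs_mult, Rabs_right; nra).
  assert (b * b = Rabs b * Rabs b) by (rewrite <- Rabs_mult, Rabs_right; nra).
  nra.
Qed.

Lemma lapl_lin a b u v i :
  lapl h (fun j => a * u j + b * v j) i = a * lapl h u i + b * lapl h v i.
Proof. unfold lapl. field. lra. Qed.

Lemma grad_lin a b u v i :
  grad h (fun j => a * u j + b * v j) i = a * grad h u i + b * grad h v i.
Proof. unfold grad. field. lra. Qed.

Lemma ip_lapl u w : ip h M (lapl h u) w = - aform h M u w.
Proof.
  unfold aform, ip. rewrite <- (Rmult_1_l (sumR _ _ (fun i => h * - lapl h u i * w i))).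
  rewrite Ropp_mult_distr_l, <- sumR_scal. apply sumR_ext. intros. ring.
Qed.

Lemma aform_lin a b u v w :
  aform h M (fun i => a * u i + b * v i) w = a * aform h M u w + b * aform h M v w.
Proof.
  unfold aform. rewrite <- ip_lin. apply ip_ext. intros. split; auto. unfold lapl. field. lra.
Qed.

Lemma aform_lin_r u a b v w :
  aform h M u (fun i => a * v i + b * w i) = a * aform h M u v + b * aform h M u w.
Proof. apply ip_lin_r. Qed.

Lemma aform_sum_by_parts u v K :
  sumR 1 K (fun i => h * (- lapl h u i) * v i) =
  sumR 0 K (fun i => (u (S i) - u i) * (v (S i) - v i) / h)
  + (u 1%nat - u 0%nat) * v 0%nat / h - (u (S K) - u K) * v (S K) / h.
Proof.
  induction K as [|K IH].
  - rewrite sumR_empty by lia. unfold sumR. simpl. field. lra.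
  - rewrite !sumR_recr, IH by lia. unfold lapl. replace (S K - 1)%nat with K by lia. field. lra.
Qed.

Hypothesis HM : (1 <= M)%nat.

Lemma aform_Vh u v : in_Vh M u -> in_Vh M v ->
  aform h M u v = sumR 0 (M - 1) (fun i => (u (S i) - u i) * (v (S i) - v i) / h).
Proof.
  intros [Hu0 HuM] [Hv0 HvM]. unfold aform, ip. rewrite aform_sum_by_parts.
  replace (S (M - 1)) with M by lia. rewrite Hv0, HvM. field. lra.
Qed.

Lemma aform_sym u v : in_Vh M u -> in_Vh M v -> aform h M u v = aform h M v u.
Proof. intros. rewrite !aform_Vh by auto. apply sumR_ext. intros. field. lra. Qed.

Lemma aform_nonneg u : in_Vh M u -> 0 <= aform h M u u.
Proof.
  intros. rewrite aform_Vh by auto. apply sumR_nonneg. intros. unfold Rdiv.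
  apply Rmult_le_pos; [apply Rle_0_sqr | left; apply Rinv_0_lt_compat; lra].
Qed.

Lemma Rabs_aform_le u v : in_Vh M u -> in_Vh M v ->
  Rabs (aform h M u v) <= sqrt (aform h M u u) * sqrt (aform h M v v).
Proof.
  apply (Cauchy_Schwarz_bilinear (in_Vh M)).
  - intros. now apply in_Vh_lin.
  - intros. apply aform_lin.
  - intros. now apply aform_sym.
  - intros. now apply aform_nonneg.
Qed.

Lemma ip_grad_self v : in_Vh M v -> ip h M (grad h v) v = 0.
Proof.
  intros [Hv0 HvM].
  assert (Htel : forall K, sumR 1 K (fun i => h * grad h v i * v i) = (v (S K) * v K - v 1%nat * v 0%nat) / 2).
  { induction K as [|K IH].
    - rewrite sumR_empty by lia. field.
    - rewrite sumR_recr, IH by lia. unfold grad. replace (S K - 1)%nat with K by lia. field. lra. }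
  unfold ip. rewrite Htel. replace (S (M - 1)) with M by lia. rewrite Hv0, HvM. field.
Qed.

(* Since [grad v i] is the average of the neighbouring forward differences, its
   square is at most the average of their squares. *)
Lemma ip_grad_le_aform v : in_Vh M v -> ip h M (grad h v) (grad h v) <= aform h M v v.
Proof.
  intros Hv. rewrite aform_Vh by auto. unfold ip.
  set (e := fun i => v (S i) - v i).
  apply Rle_trans with (sumR 1 (M - 1) (fun i => / h * ((e i * e i + e (i - 1)%nat * e (i - 1)%nat) / 2))).
  - apply sumR_le. intros i Hi.
    assert (E : / h * ((e i * e i + e (i - 1)%nat * e (i - 1)%nat) / 2) - h * grad h v i * grad h v i
                = (e i - e (i - 1)%nat) ^ 2 / (4 * h)).
    { unfold e, grad. replace (S (i - 1)) with i by lia. field. lra. }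
    assert (0 <= (e i - e (i - 1)%nat) ^ 2 / (4 * h)).
    { apply Rmult_le_pos; [apply pow2_ge_0 | left; apply Rinv_0_lt_compat; lra]. }
    lra.
  - rewrite sumR_scal, (sumR_ext 0 _ _ (fun i => / h * (e i * e i))) by (intros; unfold e, Rdiv; ring).
    rewrite sumR_scal, <- sumR_shift_average.
    assert (0 < / h) by (apply Rinv_0_lt_compat; lra).
    assert (0 <= e 0%nat * e 0%nat + e (M - 1)%nat * e (M - 1)%nat) by nra.
    nra.
Qed.

End GridFunctions.

Lemma le_div_mul_le T C : 0 < C -> T <= 1 / C -> T * C <= 1.
Proof.
  intros HC HT. apply Rmult_le_compat_r with (r := C) in HT; [|lra].
  replace (1 / C * C) with 1 in HT by (field; lra). exact HT.
Qed.

Lemma neg_mul_le_abs c x B : Rabs x <= B -> - c * x <= Rabs c * B.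
Proof.
  intros. apply Rle_trans with (Rabs (- c * x)); [apply Rle_abs|].
  rewrite Rabs_mult, Rabs_Ropp. apply Rmult_le_compat_l; [apply Rabs_pos | auto].
Qed.

Lemma young_abs X c y n : 0 < X -> 2 * Rabs c * y * n <= X * (y * y) + c ^ 2 * (n * n) / X.
Proof.
  intros HX. assert (Hc : c ^ 2 = Rabs c * Rabs c) by (rewrite <- pow2_abs; ring).
  assert (E : X * (y * y) + c ^ 2 * (n * n) / X - 2 * Rabs c * y * n = (X * y - Rabs c * n) ^ 2 / X)
    by (rewrite Hc; field; lra).
  assert (0 <= (X * y - Rabs c * n) ^ 2 / X)
    by (apply Rmult_le_pos; [apply pow2_ge_0 | left; apply Rinv_0_lt_compat; auto]).
  lra.
Qed.

Lemma le_of_sqr_le_add x a B : 0 <= x -> 0 <= a -> 0 <= B -> x * x <= a * a + x * B -> x <= a + B.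
Proof. intros. destruct (Rle_lt_dec x (a + B)); auto. nra. Qed.

Lemma sqrt_add_le x y : 0 <= x -> 0 <= y -> sqrt (x + y) <= sqrt x + sqrt y.
Proof.
  intros Hx Hy. pose proof (sqrt_pos x). pose proof (sqrt_pos y).
  rewrite <- (sqrt_square (sqrt x + sqrt y)) by lra. apply sqrt_le_1_alt.
  pose proof (sqrt_sqrt x Hx). pose proof (sqrt_sqrt y Hy). nra.
Qed.

Lemma sqrt_le_of_le_sqr x y : 0 <= y -> x <= y * y -> sqrt x <= y.
Proof. intros. rewrite <- (sqrt_square y) by auto. now apply sqrt_le_1_alt. Qed.

Lemma maxR_ge f lo hi k : (lo <= k <= hi)%nat -> f k <= maxR lo hi f.
Proof.
  intros Hk. unfold maxR.
  assert (Hin : In (f k) (map f (seq lo (S hi - lo)))) by (apply in_map, in_seq; lia).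
  generalize (f lo). induction (map f (seq lo (S hi - lo))) as [|a l IH]; intros d; simpl in *; [contradiction|].
  destruct Hin as [->|Hin]; [apply Rmax_l|].
  eapply Rle_trans; [apply IH; auto | apply Rmax_r].
Qed.

(* The step restriction [lam * tau k <= 1/2] lets the newest term
   [lam * tau m * V m] be absorbed into the left-hand side. *)
Lemma discrete_gronwall (V tau : nat -> R) A lam n : 0 <= A -> 0 <= lam ->
  (forall k, (1 <= k <= n)%nat -> 0 <= tau k /\ lam * tau k <= 1 / 2) ->
  (forall k, (k <= n)%nat -> 0 <= V k) ->
  (forall m, (1 <= m <= n)%nat -> V m <= A + lam * sumR 1 m (fun k => tau k * V k)) ->
  forall j, (S j <= n)%nat -> V (S j) <= 2 * A * exp (2 * lam * sumR 1 j tau).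
Proof.
  intros HA Hl Ht HV H.
  set (W := fun j => A + lam * sumR 1 j (fun k => tau k * V k)).
  assert (Habsorb : forall j, (S j <= n)%nat -> V (S j) <= 2 * W j).
  { intros j Hj. pose proof (H (S j) ltac:(lia)) as Hs. rewrite sumR_recr in Hs by lia.
    destruct (Ht (S j) ltac:(lia)). pose proof (HV (S j) Hj).
    assert (lam * (tau (S j) * V (S j)) <= V (S j) / 2) by nra. unfold W. lra. }
  assert (Hexp : forall j, (S j <= n)%nat -> W j <= A * exp (2 * lam * sumR 1 j tau)).
  { induction j as [|j IH]; intros Hj.
    - unfold W. rewrite !sumR_empty by lia. rewrite !Rmult_0_r, exp_0. lra.
    - specialize (IH ltac:(lia)). pose proof (Habsorb j ltac:(lia)).
      destruct (Ht (S j) ltac:(lia)) as [T1 T2].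
      assert (HW : W (S j) = W j + lam * (tau (S j) * V (S j))) by (unfold W; rewrite sumR_recr by lia; ring).
      rewrite HW, sumR_recr by lia.
      replace (2 * lam * (sumR 1 j tau + tau (S j))) with (2 * lam * sumR 1 j tau + 2 * lam * tau (S j)) by ring.
      rewrite exp_plus. pose proof (exp_ineq1_le (2 * lam * tau (S j))).
      assert (0 <= sumR 1 j (fun k => tau k * V k)).
      { apply sumR_nonneg. intros. destruct (Ht i ltac:(lia)). pose proof (HV i ltac:(lia)). nra. }
      assert (0 <= W j) by (unfold W; nra).
      assert (0 <= lam * tau (S j)) by nra.
      assert (lam * (tau (S j) * V (S j)) <= W j * (2 * lam * tau (S j))) by nra.
      assert (0 <= exp (2 * lam * sumR 1 j tau)) by (left; apply exp_pos).
      assert (W j * (1 + 2 * lam * tau (S j)) <= A * exp (2 * lam * sumR 1 j tau) * exp (2 * lam * tau (S j)))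
        by (apply Rmult_le_compat; nra).
      nra. }
  intros j Hj. pose proof (Habsorb j Hj). pose proof (Hexp j Hj). lra.
Qed.

Lemma sumR_by_parts (a b0 b1 c : nat -> R) m : c 0%nat = 0 ->
  sumR 1 m (fun j => a j * (b0 j * c j + b1 j * c (j - 1)%nat)) =
  sumR 1 m (fun k => c k * (a k * b0 k + a (S k) * b1 (S k))) - c m * a (S m) * b1 (S m).
Proof.
  intros Hc0. induction m as [|m IH].
  - rewrite !sumR_empty by lia. rewrite Hc0. ring.
  - rewrite !sumR_recr, IH by lia. replace (S m - 1)%nat with m by lia. ring.
Qed.

(* Writing [kappa k = 1 / b0] and [eta k = - b1 / b0], [bdf2_inv g] solves the
   bidiagonal system [b0 * c k + b1 * c (k - 1) = g k] with [c 0 = 0]. *)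
Definition kappa (t : nat -> R) (k : nat) : R := 1 / bdf2 t k 0.
Definition eta (t : nat -> R) (k : nat) : R := - bdf2 t k 1 / bdf2 t k 0.

Fixpoint bdf2_inv (t : nat -> R) (g : nat -> R) (k : nat) : R :=
  match k with
  | 0 => 0
  | S k' => kappa t (S k') * g (S k') + eta t (S k') * bdf2_inv t g k'
  end.

Definition indicator (j : nat) : nat -> R := fun i => if Nat.eqb i j then 1 else 0.

Lemma sumR_indicator f j m : (1 <= j <= m)%nat -> sumR 1 m (fun i => f i * indicator j i) = f j.
Proof.
  intros Hj. induction m as [|m IH]; [lia|].
  rewrite sumR_recr by lia. unfold indicator at 2. destruct (Nat.eqb_spec (S m) j) as [<-|Hne].
  - rewrite sumR_zero; [ring|]. intros i Hi. unfold indicator.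
    destruct (Nat.eqb_spec i (S m)); [lia | ring].
  - rewrite IH by lia. ring.
Qed.

Lemma bdf2_1_0 t : bdf2 t 1 0 = 1 / tau t 1.
Proof. reflexivity. Qed.

Lemma bdf2_1_1 t : bdf2 t 1 1 = 0.
Proof. reflexivity. Qed.

Lemma bdf2_ge2_0 t k : (2 <= k)%nat ->
  bdf2 t k 0 = (1 + 2 * ratio t k) / (tau t k * (1 + ratio t k)).
Proof. intros. unfold bdf2. destruct (Nat.eqb_spec k 1); [lia | reflexivity]. Qed.

Lemma bdf2_ge2_1 t k : (2 <= k)%nat ->
  bdf2 t k 1 = - (ratio t k ^ 2) / (tau t k * (1 + ratio t k)).
Proof. intros. unfold bdf2. destruct (Nat.eqb_spec k 1); [lia | reflexivity]. Qed.

Lemma bdf2_high t k j : (2 <= j)%nat -> bdf2 t k j = 0.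
Proof.
  intros. unfold bdf2.
  destruct (Nat.eqb_spec k 1), (Nat.eqb_spec j 0), (Nat.eqb_spec j 1); auto; lia.
Qed.

Lemma eta_1 t : eta t 1 = 0.
Proof. unfold eta. rewrite bdf2_1_1. unfold Rdiv. ring. Qed.

Lemma bdf2_inv_lin t a b g1 g2 k :
  bdf2_inv t (fun j => a * g1 j + b * g2 j) k = a * bdf2_inv t g1 k + b * bdf2_inv t g2 k.
Proof. induction k as [|k IH]; simpl; [ring | rewrite IH; ring]. Qed.

Lemma bdf2_inv_zero t g k : (forall j, (1 <= j <= k)%nat -> g j = 0) -> bdf2_inv t g k = 0.
Proof.
  intros Hg. induction k as [|k IH]; simpl; auto.
  rewrite Hg, IH by (intros; try apply Hg; lia). ring.
Qed.

Section TimeGrid.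
Variables (t : nat -> R) (N : nat).
Hypothesis Hinc : forall k : nat, (1 <= k <= N)%nat -> t (k - 1)%nat < t k.

Lemma tau_pos k : (1 <= k <= N)%nat -> 0 < tau t k.
Proof. intros. unfold tau. pose proof (Hinc k H). lra. Qed.

Lemma ratio_pos k : (2 <= k <= N)%nat -> 0 < ratio t k.
Proof.
  intros. unfold ratio. apply Rdiv_lt_0_compat; apply tau_pos; lia.
Qed.

Lemma tau_ratio k : (2 <= k <= N)%nat -> tau t k = ratio t k * tau t (k - 1)%nat.
Proof. intros. unfold ratio. pose proof (tau_pos (k - 1) ltac:(lia)). field. lra. Qed.

Lemma sumR_tau m : (m <= N)%nat -> sumR 1 m (tau t) = t m - t 0%nat.
Proof.
  induction m as [|m IH]; intros Hm.
  - rewrite sumR_empty by lia. ring.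
  - rewrite sumR_recr, IH by lia. unfold tau. replace (S m - 1)%nat with m by lia. ring.
Qed.

Lemma bdf2_diag_pos k : (1 <= k <= N)%nat -> 0 < bdf2 t k 0.
Proof.
  intros Hk. pose proof (tau_pos k Hk). destruct (Nat.eq_dec k 1) as [->|].
  - rewrite bdf2_1_0. apply Rdiv_lt_0_compat; lra.
  - rewrite bdf2_ge2_0 by lia. pose proof (ratio_pos k ltac:(lia)).
    apply Rdiv_lt_0_compat; nra.
Qed.

Lemma bdf2_offdiag_nonpos k : (1 <= k <= N)%nat -> bdf2 t k 1 <= 0.
Proof.
  intros Hk. destruct (Nat.eq_dec k 1) as [->|]; [rewrite bdf2_1_1; lra|].
  rewrite bdf2_ge2_1 by lia. pose proof (tau_pos k Hk). pose proof (ratio_pos k ltac:(lia)).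
  assert (0 <= ratio t k ^ 2 / (tau t k * (1 + ratio t k))).
  { apply Rmult_le_pos; [apply pow2_ge_0 | left; apply Rinv_0_lt_compat; nra]. }
  unfold Rdiv in *. rewrite <- Ropp_mult_distr_l. lra.
Qed.

Lemma kappa_pos k : (1 <= k <= N)%nat -> 0 < kappa t k.
Proof. intros. unfold kappa. apply Rdiv_lt_0_compat; [lra | now apply bdf2_diag_pos]. Qed.

Lemma eta_nonneg k : (1 <= k <= N)%nat -> 0 <= eta t k.
Proof.
  intros. unfold eta. pose proof (bdf2_diag_pos k H). pose proof (bdf2_offdiag_nonpos k H).
  unfold Rdiv. apply Rmult_le_pos; [lra | left; apply Rinv_0_lt_compat; lra].
Qed.

Lemma eta_2 : (2 <= N)%nat -> eta t 2 = ratio t 2 ^ 2 / (1 + 2 * ratio t 2).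
Proof.
  intros. unfold eta. rewrite bdf2_ge2_0, bdf2_ge2_1 by lia.
  pose proof (ratio_pos 2 ltac:(lia)). pose proof (tau_pos 2 ltac:(lia)).
  field. repeat split; nra.
Qed.

Lemma kappa_eta_tau k : (1 <= k <= N)%nat -> kappa t k + eta t k * tau t (k - 1)%nat = tau t k.
Proof.
  intros Hk. pose proof (tau_pos k Hk). destruct (Nat.eq_dec k 1) as [->|].
  - rewrite eta_1. unfold kappa. rewrite bdf2_1_0. field. lra.
  - unfold kappa, eta. rewrite bdf2_ge2_0, bdf2_ge2_1 by lia. pose proof (ratio_pos k ltac:(lia)).
    rewrite (tau_ratio k) by lia. pose proof (tau_pos (k - 1) ltac:(lia)).
    field. repeat split; nra.
Qed.

Lemma kappa_le_tau k : (1 <= k <= N)%nat -> kappa t k <= tau t k.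
Proof.
  intros Hk. rewrite <- (kappa_eta_tau k Hk). pose proof (eta_nonneg k Hk).
  destruct (Nat.eq_dec k 1) as [->|]; [rewrite eta_1; lra|].
  pose proof (tau_pos (k - 1) ltac:(lia)). nra.
Qed.

Lemma eta_tau_le_half k : (1 <= k <= N)%nat -> eta t k * tau t (k - 1)%nat <= tau t k / 2.
Proof.
  intros Hk. pose proof (tau_pos k Hk). destruct (Nat.eq_dec k 1) as [->|]; [rewrite eta_1; lra|].
  unfold eta. rewrite bdf2_ge2_0, bdf2_ge2_1 by lia. pose proof (ratio_pos k ltac:(lia)).
  rewrite (tau_ratio k) by lia. pose proof (tau_pos (k - 1) ltac:(lia)).
  set (r := ratio t k) in *. set (s := tau t (k - 1)%nat) in *.
  match goal with |- ?L <= _ => replace L with (r * s / 2 - r * s / (2 * (1 + 2 * r)))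
    by (field; repeat split; nra) end.
  assert (0 <= r * s / (2 * (1 + 2 * r))) by (apply Rlt_le, Rdiv_lt_0_compat; nra).
  lra.
Qed.

Lemma bdf2_inv_spec g k : (1 <= k <= N)%nat ->
  g k = bdf2 t k 0 * bdf2_inv t g k + bdf2 t k 1 * bdf2_inv t g (k - 1)%nat.
Proof.
  intros Hk. destruct k as [|k]; [lia|]. simpl bdf2_inv. rewrite Nat.sub_0_r.
  unfold kappa, eta. pose proof (bdf2_diag_pos (S k) Hk). field. lra.
Qed.

Lemma bdf2_inv_le_compat g1 g2 k : (k <= N)%nat ->
  (forall j, (1 <= j <= k)%nat -> g1 j <= g2 j) -> bdf2_inv t g1 k <= bdf2_inv t g2 k.
Proof.
  induction k as [|k IH]; intros Hk Hg; simpl; [lra|].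
  pose proof (kappa_pos (S k) ltac:(lia)). pose proof (eta_nonneg (S k) ltac:(lia)).
  assert (g1 (S k) <= g2 (S k)) by (apply Hg; lia).
  assert (bdf2_inv t g1 k <= bdf2_inv t g2 k) by (apply IH; [lia | intros; apply Hg; lia]).
  nra.
Qed.

Lemma bdf2_inv_nonneg g k : (k <= N)%nat ->
  (forall j, (1 <= j <= k)%nat -> 0 <= g j) -> 0 <= bdf2_inv t g k.
Proof.
  intros Hk Hg. rewrite <- (bdf2_inv_zero t (fun _ => 0) k) by auto.
  now apply bdf2_inv_le_compat.
Qed.

(* The case [k = 0] holds because [tau t 0 = t 0 - t (0 - 1) = 0]. *)
Lemma bdf2_inv_one k : (k <= N)%nat -> bdf2_inv t (fun _ => 1) k = tau t k.
Proof.
  induction k as [|k IH]; intros Hk; simpl; [unfold tau; simpl; ring|].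
  rewrite IH by lia. pose proof (kappa_eta_tau (S k) ltac:(lia)).
  replace (S k - 1)%nat with k in H by lia. lra.
Qed.

Lemma bdf2_inv_le g G k : (k <= N)%nat ->
  (forall j, (1 <= j <= k)%nat -> g j <= G) -> bdf2_inv t g k <= tau t k * G.
Proof.
  intros Hk Hg.
  assert (HG : bdf2_inv t (fun j => G * 1 + 0 * 1) k = tau t k * G).
  { rewrite bdf2_inv_lin, bdf2_inv_one by auto. ring. }
  rewrite <- HG. apply bdf2_inv_le_compat; auto. intros. rewrite Hg by auto. lra.
Qed.

Lemma bdf2_inv_indicator_nonneg j k : (k <= N)%nat -> 0 <= bdf2_inv t (indicator j) k.
Proof.
  intros. apply bdf2_inv_nonneg; auto. intros i _. unfold indicator. destruct (Nat.eqb i j); lra.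
Qed.

Lemma bdf2_inv_indicator_before j k : (k < j)%nat -> bdf2_inv t (indicator j) k = 0.
Proof.
  intros. apply bdf2_inv_zero. intros i Hi. unfold indicator.
  destruct (Nat.eqb_spec i j); [lia | reflexivity].
Qed.

Lemma bdf2_inv_indicator_at j : (1 <= j)%nat -> bdf2_inv t (indicator j) j = kappa t j.
Proof.
  intros. destruct j as [|j]; [lia|]. simpl bdf2_inv.
  rewrite bdf2_inv_indicator_before by lia. unfold indicator. rewrite Nat.eqb_refl. ring.
Qed.

Lemma bdf2_inv_indicator_after j k : (j <= k)%nat ->
  bdf2_inv t (indicator j) (S k) = eta t (S k) * bdf2_inv t (indicator j) k.
Proof.
  intros. simpl bdf2_inv. unfold indicator at 1.
  destruct (Nat.eqb_spec (S k) j); [lia | ring].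
Qed.

(* Induction on [m >= j]: after its first entry [kappa j <= tau j], the sequence
   [c = bdf2_inv (indicator j)] decays at least by the factor [tau k / (2 tau (k - 1))]. *)
Lemma bdf2_inv_indicator_sum_le T j m : (forall k, (1 <= k <= N)%nat -> tau t k <= T) ->
  (1 <= j <= m)%nat -> (m <= N)%nat ->
  sumR 1 m (bdf2_inv t (indicator j)) + bdf2_inv t (indicator j) m * T / tau t m <= 2 * T.
Proof.
  intros HT [Hj Hjm] Hm. set (c := bdf2_inv t (indicator j)).
  induction Hjm as [|m Hjm IH].
  - destruct j as [|j']; [lia|].
    pose proof (tau_pos (S j') ltac:(lia)). pose proof (HT (S j') ltac:(lia)).
    pose proof (kappa_le_tau (S j') ltac:(lia)). pose proof (kappa_pos (S j') ltac:(lia)).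
    rewrite sumR_recr, (sumR_zero 1 j') by (try lia; intros; apply bdf2_inv_indicator_before; lia).
    unfold c. rewrite bdf2_inv_indicator_at by lia.
    assert (kappa t (S j') * T / tau t (S j') <= T).
    { apply Rmult_le_reg_r with (tau t (S j')); [lra|]. unfold Rdiv.
      rewrite Rmult_assoc, Rinv_l by lra. nra. }
    lra.
  - specialize (IH ltac:(lia)). rewrite sumR_recr by lia.
    unfold c at 2 3. rewrite bdf2_inv_indicator_after by lia. fold c.
    pose proof (tau_pos m ltac:(lia)). pose proof (tau_pos (S m) ltac:(lia)).
    pose proof (HT (S m) ltac:(lia)).
    assert (0 <= c m) by (apply bdf2_inv_indicator_nonneg; lia).
    pose proof (eta_nonneg (S m) ltac:(lia)).
    pose proof (eta_tau_le_half (S m) ltac:(lia)) as He. replace (S m - 1)%nat with m in He by lia.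
    assert (eta t (S m) * c m * T / tau t (S m) <= c m * T / (2 * tau t m)).
    { apply Rmult_le_reg_r with (2 * tau t m * tau t (S m)); [nra|].
      replace (eta t (S m) * c m * T / tau t (S m) * (2 * tau t m * tau t (S m)))
        with (2 * (eta t (S m) * tau t m) * (c m * T)) by (field; lra).
      replace (c m * T / (2 * tau t m) * (2 * tau t m * tau t (S m))) with (tau t (S m) * (c m * T))
        by (field; lra).
      assert (0 <= c m * T) by nra. nra. }
    assert (eta t (S m) * c m <= c m * T / (2 * tau t m)).
    { apply Rmult_le_reg_r with (2 * tau t m); [lra|].
      replace (c m * T / (2 * tau t m) * (2 * tau t m)) with (c m * T) by (field; lra). nra. }
    assert (c m * T / (2 * tau t m) + c m * T / (2 * tau t m) = c m * T / tau t m) by (field; lra).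
    lra.
Qed.

Variable p : nat -> nat -> R.
Hypothesis Hp : is_DCC t N p.

Lemma dcc_diag m : (1 <= m <= N)%nat -> p m 0%nat * bdf2 t m 0 = 1.
Proof.
  intros Hm. pose proof (Hp m m Hm ltac:(lia)) as E.
  rewrite sumR_recl, sumR_empty, !Nat.sub_diag in E by lia. lra.
Qed.

Lemma dcc_offdiag m k : (1 <= k)%nat -> (k < m)%nat -> (m <= N)%nat ->
  p m (m - k)%nat * bdf2 t k 0 + p m (m - S k)%nat * bdf2 t (S k) 1 = 1.
Proof.
  intros. pose proof (Hp m k ltac:(lia) ltac:(lia)) as E.
  rewrite sumR_recl, sumR_recl in E by lia.
  rewrite (sumR_zero (S (S k))) in E by (intros; rewrite bdf2_high by lia; ring).
  rewrite Nat.sub_diag in E. replace (S k - k)%nat with 1%nat in E by lia. lra.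
Qed.

(* The DCC kernels are the column sums of the inverse of the BDF2 matrix. *)
Lemma sumR_bdf2_inv g m : (1 <= m <= N)%nat ->
  sumR 1 m (bdf2_inv t g) = sumR 1 m (fun j => p m (m - j)%nat * g j).
Proof.
  intros Hm.
  rewrite (sumR_ext 1 m (fun j => p m (m - j)%nat * g j)
             (fun j => p m (m - j)%nat * (bdf2 t j 0 * bdf2_inv t g j + bdf2 t j 1 * bdf2_inv t g (j - 1)%nat)))
    by (intros; rewrite <- bdf2_inv_spec by lia; reflexivity).
  rewrite (sumR_by_parts (fun j => p m (m - j)%nat) (fun j => bdf2 t j 0) (fun j => bdf2 t j 1)
             (bdf2_inv t g) m eq_refl).
  destruct m as [|m]; [lia|].
  rewrite !sumR_recr by lia.
  rewrite (sumR_ext 1 m (fun k => bdf2_inv t g k * (p (S m) (S m - k)%nat * bdf2 t k 0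
                                   + p (S m) (S m - S k)%nat * bdf2 t (S k) 1)) (bdf2_inv t g))
    by (intros; rewrite dcc_offdiag by lia; ring).
  rewrite Nat.sub_diag, (dcc_diag (S m) Hm). ring.
Qed.

Lemma dcc_kernel_bdf2_inv m j : (1 <= j <= m)%nat -> (m <= N)%nat ->
  p m (m - j)%nat = sumR 1 m (bdf2_inv t (indicator j)).
Proof. intros. rewrite sumR_bdf2_inv, sumR_indicator by lia. reflexivity. Qed.

Lemma dcc_kernel_nonneg m j : (1 <= j <= m)%nat -> (m <= N)%nat -> 0 <= p m (m - j)%nat.
Proof.
  intros. rewrite dcc_kernel_bdf2_inv by lia. apply sumR_nonneg. intros.
  apply bdf2_inv_indicator_nonneg. lia.
Qed.

Lemma dcc_kernel_sum m : (1 <= m <= N)%nat -> sumR 1 m (fun j => p m (m - j)%nat) = t m - t 0%nat.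
Proof.
  intros Hm. rewrite (sumR_ext _ _ _ (fun j => p m (m - j)%nat * 1)) by (intros; ring).
  rewrite <- sumR_bdf2_inv by auto.
  rewrite (sumR_ext _ _ _ (tau t)) by (intros; apply bdf2_inv_one; lia).
  apply sumR_tau. lia.
Qed.

Lemma dcc_weighted_sum_le g m : (1 <= m <= N)%nat ->
  sumR 1 m (fun k => p m (m - k)%nat * g k) <= (t m - t 0%nat) * maxR 1 m g.
Proof.
  intros Hm. apply Rle_trans with (sumR 1 m (fun k => maxR 1 m g * p m (m - k)%nat)).
  - apply sumR_le. intros k Hk. rewrite (Rmult_comm (maxR 1 m g)).
    apply Rmult_le_compat_l; [apply dcc_kernel_nonneg; lia | apply maxR_ge; lia].
  - rewrite sumR_scal, dcc_kernel_sum by auto. lra.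
Qed.

Lemma dcc_kernel_first_ge m : (2 <= m <= N)%nat -> tau t 1 * (1 + eta t 2) <= p m (m - 1)%nat.
Proof.
  intros Hm. rewrite dcc_kernel_bdf2_inv, sumR_recl, sumR_recl by lia.
  assert (0 <= sumR 3 m (bdf2_inv t (indicator 1))).
  { apply sumR_nonneg. intros. apply bdf2_inv_indicator_nonneg. lia. }
  simpl. unfold indicator in *. simpl. rewrite eta_1. unfold kappa. rewrite bdf2_1_0.
  pose proof (tau_pos 1 ltac:(lia)).
  replace (1 / (1 / tau t 1)) with (tau t 1) by (field; lra). nra.
Qed.

Lemma dcc_kernel_le T : (forall k, (1 <= k <= N)%nat -> tau t k <= T) ->
  forall m j, (1 <= j <= m)%nat -> (m <= N)%nat -> p m (m - j)%nat <= 2 * T.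
Proof.
  intros HT m j Hj Hm. rewrite dcc_kernel_bdf2_inv by lia.
  pose proof (bdf2_inv_indicator_sum_le T j m HT Hj Hm).
  pose proof (bdf2_inv_indicator_nonneg j m Hm). pose proof (tau_pos m ltac:(lia)). pose proof (HT m ltac:(lia)).
  assert (0 <= bdf2_inv t (indicator j) m * T / tau t m)
    by (apply Rmult_le_pos; [nra | left; apply Rinv_0_lt_compat; lra]).
  lra.
Qed.

End TimeGrid.

Lemma sqrt_pow2 x : 0 <= x -> sqrt x ^ 2 = x.
Proof. intros. simpl. rewrite Rmult_1_r. now apply sqrt_sqrt. Qed.

Definition young_weight (w : R) : R := w ^ 3 / (2 * (1 + w ^ 2)).

Lemma young_weight_nonneg w : 0 <= w -> 0 <= young_weight w.
Proof.
  intros. unfold young_weight. apply Rmult_le_pos; [now apply pow_le|].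
  left. apply Rinv_0_lt_compat. nra.
Qed.

Lemma young_weight_le_compat w W : 0 <= w <= W -> young_weight w <= young_weight W.
Proof.
  intros. unfold young_weight.
  assert (E : W ^ 3 / (2 * (1 + W ^ 2)) - w ^ 3 / (2 * (1 + w ^ 2))
              = (W - w) * ((W ^ 2 + W * w + w ^ 2) + w ^ 2 * W ^ 2) / (2 * (1 + w ^ 2) * (1 + W ^ 2)))
    by (field; nra).
  assert (0 <= (W - w) * ((W ^ 2 + W * w + w ^ 2) + w ^ 2 * W ^ 2) / (2 * (1 + w ^ 2) * (1 + W ^ 2))).
  { apply Rmult_le_pos; [apply Rmult_le_pos; nra | left; apply Rinv_0_lt_compat; nra]. }
  lra.
Qed.

(* Young's inequality for the off-diagonal BDF2 coefficient, with [r = w ^ 2]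
   and [tp] the previous step, so that [r * tp] is the current one. *)
Lemma bdf2_offdiag_young r tp y y' : 0 < r -> 0 < tp -> 0 <= y -> 0 <= y' ->
  r ^ 2 / ((r * tp) * (1 + r)) * y * y' <= young_weight (sqrt r) * (y ^ 2 / (r * tp) + y' ^ 2 / tp).
Proof.
  intros. set (w := sqrt r). assert (Hw2 : w ^ 2 = r) by (apply sqrt_pow2; lra).
  assert (0 < w) by (apply sqrt_lt_R0; lra). unfold young_weight. rewrite <- Hw2.
  assert (E : w ^ 3 / (2 * (1 + w ^ 2)) * (y ^ 2 / (w ^ 2 * tp) + y' ^ 2 / tp)
              - (w ^ 2) ^ 2 / (w ^ 2 * tp * (1 + w ^ 2)) * y * y'
              = w * (y - w * y') ^ 2 / (2 * (1 + w ^ 2) * tp)) by (field; repeat split; nra).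
  assert (0 <= w * (y - w * y') ^ 2 / (2 * (1 + w ^ 2) * tp)).
  { apply Rmult_le_pos; [apply Rmult_le_pos; [lra | apply pow2_ge_0] | left; apply Rinv_0_lt_compat; nra]. }
  lra.
Qed.

Lemma bdf2_diag_margin_small w : 0 <= w <= 2 -> 1 <= (1 + 2 * w ^ 2) / (1 + w ^ 2) - young_weight w.
Proof.
  intros. unfold young_weight.
  assert (E : (1 + 2 * w ^ 2) / (1 + w ^ 2) - w ^ 3 / (2 * (1 + w ^ 2)) - 1
              = w ^ 2 * (2 - w) / (2 * (1 + w ^ 2))) by (field; nra).
  assert (0 <= w ^ 2 * (2 - w) / (2 * (1 + w ^ 2))).
  { apply Rmult_le_pos; [apply Rmult_le_pos; nra | left; apply Rinv_0_lt_compat; nra]. }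
  lra.
Qed.

Lemma bdf2_diag_margin_antitone w W : 2 <= w <= W ->
  (1 + 2 * W ^ 2) / (1 + W ^ 2) - young_weight W <= (1 + 2 * w ^ 2) / (1 + w ^ 2) - young_weight w.
Proof.
  intros. unfold young_weight.
  assert (E : (1 + 2 * w ^ 2) / (1 + w ^ 2) - w ^ 3 / (2 * (1 + w ^ 2))
              - ((1 + 2 * W ^ 2) / (1 + W ^ 2) - W ^ 3 / (2 * (1 + W ^ 2)))
              = (W - w) * ((W ^ 2 + W * w + w ^ 2) + w ^ 2 * W ^ 2 - 2 * (W + w))
                / (2 * (1 + w ^ 2) * (1 + W ^ 2))) by (field; nra).
  assert (0 <= (W ^ 2 + W * w + w ^ 2) + w ^ 2 * W ^ 2 - 2 * (W + w)) by nra.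
  assert (0 <= (W - w) * ((W ^ 2 + W * w + w ^ 2) + w ^ 2 * W ^ 2 - 2 * (W + w))
               / (2 * (1 + w ^ 2) * (1 + W ^ 2))).
  { apply Rmult_le_pos; [apply Rmult_le_pos; lra | left; apply Rinv_0_lt_compat; nra]. }
  lra.
Qed.

(* [S = sqrt rmax]: the equation [rmax ^ 3 = (2 rmax + 1) ^ 2] becomes
   [S ^ 3 = 2 S ^ 2 + 1], whose real root lies in (2.2, 2.21). *)
Lemma margin_poly_le S W : 2.2 < S < 2.21 -> S ^ 3 = 2 * S ^ 2 + 1 -> 0 < W < S ->
  2 * S * (S ^ 2 - W ^ 2) * (1 + W ^ 2) <= (2 * (1 + W ^ 2) - W ^ 3) * (1 + S ^ 2) ^ 2.
Proof.
  intros HS HE HW.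
  assert (Q : 34 <= (1 + S ^ 2) ^ 2) by nra.
  assert (Q2 : S ^ 2 <= 4.9) by nra.
  assert (W2 : 0 <= W ^ 2) by nra.
  destruct (Rle_lt_dec W 1.5).
  - assert (2 + 0.5 * W ^ 2 <= 2 * (1 + W ^ 2) - W ^ 3).
    { assert (0 <= W ^ 2 * (1.5 - W)) by (apply Rmult_le_pos; lra). nra. }
    assert (2 * S * (S ^ 2 - W ^ 2) * (1 + W ^ 2) <= 2 * 2.21 * 4.9 * (1 + W ^ 2)).
    { apply Rmult_le_compat_r; [lra|]. assert (0 <= S ^ 2 - W ^ 2) by nra. nra. }
    nra.
  - destruct (Rle_lt_dec W 2).
    + assert (2 <= 2 * (1 + W ^ 2) - W ^ 3).
      { assert (0 <= W ^ 2 * (2 - W)) by (apply Rmult_le_pos; lra). nra. }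
      assert ((S ^ 2 - W ^ 2) * (1 + W ^ 2) <= 2.65 * 5).
      { assert (S ^ 2 - W ^ 2 <= 2.65) by nra. assert (0 <= S ^ 2 - W ^ 2) by nra.
        assert (1 + W ^ 2 <= 5) by nra. nra. }
      assert (0 <= (S ^ 2 - W ^ 2) * (1 + W ^ 2)) by (apply Rmult_le_pos; nra).
      replace (2 * S * (S ^ 2 - W ^ 2) * (1 + W ^ 2)) with (2 * S * ((S ^ 2 - W ^ 2) * (1 + W ^ 2))) by ring.
      nra.
    + assert (1 <= 2 * (1 + W ^ 2) - W ^ 3).
      { assert (E : 2 * (1 + W ^ 2) - W ^ 3 - 1 = (S - W) * (S ^ 2 + S * W + W ^ 2 - 2 * S - 2 * W)) by nra.
        assert (0 <= S ^ 2 + S * W + W ^ 2 - 2 * S - 2 * W) by nra. nra. }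
      assert (2 * S * (S ^ 2 - W ^ 2) * (1 + W ^ 2) <= 2 * S * (S - W) * (2 * S) * (1 + S ^ 2)).
      { replace (2 * S * (S ^ 2 - W ^ 2) * (1 + W ^ 2)) with ((2 * S * (S - W)) * ((S + W) * (1 + W ^ 2))) by ring.
        replace (2 * S * (S - W) * (2 * S) * (1 + S ^ 2)) with ((2 * S * (S - W)) * ((2 * S) * (1 + S ^ 2))) by ring.
        apply Rmult_le_compat_l; [nra | apply Rmult_le_compat; nra]. }
      assert (2 * S * (S - W) * (2 * S) * (1 + S ^ 2) <= 4 * 4.9 * 0.21 * (1 + S ^ 2)).
      { replace (2 * S * (S - W) * (2 * S) * (1 + S ^ 2)) with ((4 * S ^ 2) * (S - W) * (1 + S ^ 2)) by ring.
        apply Rmult_le_compat_r; [nra | apply Rmult_le_compat; nra]. }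
      nra.
Qed.

Lemma margin_large_le S W : 2.2 < S < 2.21 -> S ^ 3 = 2 * S ^ 2 + 1 -> 2 <= W < S ->
  S * (S ^ 2 - W ^ 2) / (2 * (1 + S ^ 2) ^ 2)
  <= (1 + 2 * W ^ 2) / (1 + W ^ 2) - young_weight W - young_weight W.
Proof.
  intros. unfold young_weight. assert (0 < 1 + W ^ 2) by nra.
  assert (E : (1 + 2 * W ^ 2) / (1 + W ^ 2) - W ^ 3 / (2 * (1 + W ^ 2)) - W ^ 3 / (2 * (1 + W ^ 2))
              = (S - W) * (S ^ 2 + S * W + W ^ 2 - 2 * S - 2 * W) / (1 + W ^ 2)).
  { apply Rmult_eq_reg_r with (1 + W ^ 2); [|lra]. field_simplify; try lra; try nra. }
  rewrite E.
  assert (X : (S + W) * (S - 2) <= S ^ 2 + S * W + W ^ 2 - 2 * S - 2 * W) by nra.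
  assert (Y : S <= 2 * (S - 2) * (1 + S ^ 2)) by nra.
  apply Rmult_le_reg_r with (2 * (1 + S ^ 2) ^ 2 * (1 + W ^ 2)); [nra|].
  replace (S * (S ^ 2 - W ^ 2) / (2 * (1 + S ^ 2) ^ 2) * (2 * (1 + S ^ 2) ^ 2 * (1 + W ^ 2)))
    with ((S - W) * (S * (S + W) * (1 + W ^ 2))) by (field; nra).
  replace ((S - W) * (S ^ 2 + S * W + W ^ 2 - 2 * S - 2 * W) / (1 + W ^ 2) * (2 * (1 + S ^ 2) ^ 2 * (1 + W ^ 2)))
    with ((S - W) * ((S ^ 2 + S * W + W ^ 2 - 2 * S - 2 * W) * (2 * (1 + S ^ 2) ^ 2))) by (field; nra).
  apply Rmult_le_compat_l; [lra|].
  assert (1 + W ^ 2 <= 1 + S ^ 2) by nra.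
  apply Rle_trans with (((S + W) * (S - 2)) * (2 * (1 + S ^ 2) ^ 2)); [|apply Rmult_le_compat_r; nra].
  apply Rle_trans with (S * (S + W) * (1 + S ^ 2)); [apply Rmult_le_compat_l; nra|].
  replace (((S + W) * (S - 2)) * (2 * (1 + S ^ 2) ^ 2))
    with ((2 * (S - 2) * (1 + S ^ 2)) * ((S + W) * (1 + S ^ 2))) by ring.
  replace (S * (S + W) * (1 + S ^ 2)) with (S * ((S + W) * (1 + S ^ 2))) by ring.
  apply Rmult_le_compat_r; nra.
Qed.

Definition Cr (rmax : R) : R := sqrt rmax / (1 + rmax) ^ 2.

Section RatioBound.
Variable rmax : R.
Hypothesis Hrmax_pos : 0 < rmax.
Hypothesis Hrmax_root : rmax ^ 3 = (2 * rmax + 1) ^ 2.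

Lemma sqrt_rmax_cubic : sqrt rmax ^ 3 = 2 * sqrt rmax ^ 2 + 1.
Proof.
  pose proof (sqrt_pow2 rmax ltac:(lra)) as HS. pose proof (sqrt_lt_R0 rmax Hrmax_pos).
  set (S := sqrt rmax) in *. rewrite <- HS in Hrmax_root.
  assert (E : (S ^ 3 - (2 * S ^ 2 + 1)) * (S ^ 3 + (2 * S ^ 2 + 1)) = 0) by nra.
  apply Rmult_integral in E. destruct E; nra.
Qed.

Lemma sqrt_rmax_bounds : 2.2 < sqrt rmax < 2.21.
Proof. pose proof (sqrt_lt_R0 rmax Hrmax_pos). pose proof sqrt_rmax_cubic. split; nra. Qed.

Lemma rmax_bounds : 4.84 < rmax < 4.885.
Proof. rewrite <- (sqrt_pow2 rmax) by lra. pose proof sqrt_rmax_bounds. split; nra. Qed.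

Lemma Cr_pos : 0 < Cr rmax.
Proof. unfold Cr. apply Rdiv_lt_0_compat; [apply sqrt_lt_R0; lra | apply pow_lt; lra]. Qed.

Variable delta : R.
Hypothesis Hdelta : 0 < delta < rmax.

Lemma Cr_delta_eq : Cr rmax * delta
  = sqrt rmax * (sqrt rmax ^ 2 - sqrt (rmax - delta) ^ 2) / (1 + sqrt rmax ^ 2) ^ 2.
Proof. unfold Cr. rewrite !sqrt_pow2 by lra. field. lra. Qed.

Lemma sqrt_rmax_delta_lt : 0 < sqrt (rmax - delta) < sqrt rmax.
Proof. split; [apply sqrt_lt_R0; lra | apply sqrt_lt_1_alt; lra]. Qed.

Lemma Cr_delta_le : Cr rmax * delta <= 1 - young_weight (sqrt (rmax - delta)).
Proof.
  rewrite Cr_delta_eq. pose proof sqrt_rmax_bounds. pose proof sqrt_rmax_cubic.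
  pose proof sqrt_rmax_delta_lt.
  set (S := sqrt rmax) in *. set (W := sqrt (rmax - delta)) in *.
  pose proof (margin_poly_le S W ltac:(lra) ltac:(lra) ltac:(lra)).
  unfold young_weight. assert (0 < 1 + W ^ 2) by nra. assert (0 < (1 + S ^ 2) ^ 2) by nra.
  replace (S * (S ^ 2 - W ^ 2) / (1 + S ^ 2) ^ 2)
    with ((2 * S * (S ^ 2 - W ^ 2) * (1 + W ^ 2)) / (2 * (1 + W ^ 2) * (1 + S ^ 2) ^ 2)) by (field; split; nra).
  replace (1 - W ^ 3 / (2 * (1 + W ^ 2)))
    with (((2 * (1 + W ^ 2) - W ^ 3) * (1 + S ^ 2) ^ 2) / (2 * (1 + W ^ 2) * (1 + S ^ 2) ^ 2)) by (field; split; nra).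
  apply Rmult_le_compat_r; [left; apply Rinv_0_lt_compat; nra | auto].
Qed.

(* [rmax] is exactly where the margin [(1 + 2 r) / (1 + r) - 2 * young_weight (sqrt r)]
   vanishes, since [young_weight (sqrt r) = r * sqrt r / (2 (1 + r))]. *)
Lemma bdf2_margin r : 0 < r <= rmax - delta ->
  Cr rmax * delta / 2 <= (1 + 2 * r) / (1 + r) - young_weight (sqrt r) - young_weight (sqrt (rmax - delta)).
Proof.
  intros Hr.
  pose proof sqrt_rmax_delta_lt. pose proof Cr_delta_le. pose proof Cr_pos.
  set (W := sqrt (rmax - delta)) in *.
  set (w := sqrt r). assert (Hw2 : w ^ 2 = r) by (apply sqrt_pow2; lra).
  assert (0 < w) by (apply sqrt_lt_R0; lra). assert (w <= W) by (apply sqrt_le_1_alt; lra).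
  rewrite <- Hw2.
  destruct (Rle_lt_dec w 2).
  - pose proof (bdf2_diag_margin_small w ltac:(lra)). nra.
  - pose proof (bdf2_diag_margin_antitone w W ltac:(lra)).
    rewrite Cr_delta_eq. fold W. pose proof sqrt_rmax_bounds. pose proof sqrt_rmax_cubic.
    pose proof (margin_large_le (sqrt rmax) W ltac:(lra) ltac:(lra) ltac:(lra)).
    assert (sqrt rmax * (sqrt rmax ^ 2 - W ^ 2) / (1 + sqrt rmax ^ 2) ^ 2 / 2
            = sqrt rmax * (sqrt rmax ^ 2 - W ^ 2) / (2 * (1 + sqrt rmax ^ 2) ^ 2)) by (field; nra).
    lra.
Qed.

Lemma young_weight_rmax_le : young_weight (sqrt (rmax - delta)) <= 1 - 1 / (2 * (1 + rmax)).
Proof.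
  pose proof sqrt_rmax_delta_lt as Hlt.
  pose proof (young_weight_le_compat (sqrt (rmax - delta)) (sqrt rmax) ltac:(lra)) as H.
  unfold young_weight at 2 in H. rewrite sqrt_rmax_cubic, sqrt_pow2 in H by lra.
  replace ((2 * rmax + 1) / (2 * (1 + rmax))) with (1 - 1 / (2 * (1 + rmax))) in H by (field; lra).
  exact H.
Qed.

End RatioBound.

(* The first two terms of the BDF2 quadratic form: the cross term is split by
   Young's inequality with weight [s], leaving [nu * y1 ^ 2 / tau1] uncontrolled. *)
Lemma bdf2_form_start tau1 r y1 y2 s nu mu f :
  0 < tau1 -> 0 < r -> 0 <= y1 -> 0 <= y2 -> 0 < s -> nu = r / (4 * s) -> mu + f <= 1 - s ->
  mu * (y2 * y2 / (r * tau1)) - nu * (y1 * y1 / tau1) + f * (y2 * y2 / (r * tau1))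
  <= y1 * y1 / tau1 + (1 + 2 * r) / ((r * tau1) * (1 + r)) * (y2 * y2)
     + (- r ^ 2 / ((r * tau1) * (1 + r))) * (y2 * y1).
Proof.
  intros. subst nu.
  assert (A : 1 <= (1 + 2 * r) / (1 + r)).
  { apply Rmult_le_reg_r with (1 + r); [lra|]. unfold Rdiv. rewrite Rmult_assoc, Rinv_l by lra. lra. }
  assert (Bm : y2 * y1 <= s * (y2 * y2) / r + r * (y1 * y1) / (4 * s)).
  { assert (E : s * (y2 * y2) / r + r * (y1 * y1) / (4 * s) - y2 * y1 = (2 * s * y2 - r * y1) ^ 2 / (4 * s * r))
      by (field; lra).
    assert (0 <= (2 * s * y2 - r * y1) ^ 2 / (4 * s * r))
      by (apply Rmult_le_pos; [apply pow2_ge_0 | left; apply Rinv_0_lt_compat; nra]).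
    lra. }
  assert (C : r / (1 + r) * (y2 * y1) <= y2 * y1).
  { assert (0 <= y2 * y1) by nra. apply Rmult_le_reg_r with (1 + r); [lra|].
    replace (r / (1 + r) * (y2 * y1) * (1 + r)) with (r * (y2 * y1)) by (field; lra). nra. }
  replace ((1 + 2 * r) / ((r * tau1) * (1 + r)) * (y2 * y2)) with ((1 + 2 * r) / (1 + r) * ((y2 * y2 / r) / tau1))
    by (field; lra).
  replace ((- r ^ 2 / ((r * tau1) * (1 + r))) * (y2 * y1)) with (- (r / (1 + r) * (y2 * y1)) / tau1) by (field; lra).
  replace (r / (4 * s) * (y1 * y1 / tau1)) with ((r * (y1 * y1) / (4 * s)) / tau1) by (field; lra).
  replace (y2 * y2 / (r * tau1)) with ((y2 * y2 / r) / tau1) by (field; lra).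
  replace (s * (y2 * y2) / r) with (s * (y2 * y2 / r)) in Bm by (field; lra).
  assert (0 <= y2 * y2 / r) by (apply Rmult_le_pos; [nra | left; apply Rinv_0_lt_compat; lra]).
  set (Y := y2 * y2 / r) in *.
  assert (0 < / tau1) by (apply Rinv_0_lt_compat; lra).
  unfold Rdiv. rewrite <- !Rmult_assoc.
  assert ((mu + f + s) * Y <= (1 + 2 * r) * / (1 + r) * Y) by (apply Rmult_le_compat_r; auto; unfold Rdiv in A; lra).
  assert (0 <= r * (y1 * y1) * / (4 * s)) by (apply Rmult_le_pos; [nra | left; apply Rinv_0_lt_compat; lra]).
  unfold Rdiv in Bm. nra.
Qed.

Lemma bdf2_form_step r tp y ym F f mu :
  0 < r -> 0 < tp -> 0 <= y -> 0 <= ym -> F <= f ->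
  r ^ 2 / ((r * tp) * (1 + r)) * y * ym <= F * (y ^ 2 / (r * tp) + ym ^ 2 / tp) ->
  mu <= (1 + 2 * r) / (1 + r) - F - f ->
  (mu + f) * (y * y / (r * tp))
  <= (1 + 2 * r) / ((r * tp) * (1 + r)) * (y * y) + (- r ^ 2 / ((r * tp) * (1 + r))) * (y * ym)
     + f * (ym * ym / tp).
Proof.
  intros Hr Htp Hy Hym HFf HY Hmu.
  replace ((1 + 2 * r) / ((r * tp) * (1 + r)) * (y * y)) with ((1 + 2 * r) / (1 + r) * (y * y / (r * tp)))
    by (field; lra).
  replace ((- r ^ 2 / ((r * tp) * (1 + r))) * (y * ym)) with (- (r ^ 2 / ((r * tp) * (1 + r)) * y * ym))
    by (field; lra).
  assert (0 <= y * y / (r * tp)) by (apply Rmult_le_pos; [nra | left; apply Rinv_0_lt_compat; nra]).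
  assert (0 <= ym * ym / tp) by (apply Rmult_le_pos; [nra | left; apply Rinv_0_lt_compat; nra]).
  replace (y ^ 2) with (y * y) in HY by ring. replace (ym ^ 2) with (ym * ym) in HY by ring.
  assert (F * (ym * ym / tp) <= f * (ym * ym / tp)) by (apply Rmult_le_compat_r; auto).
  assert ((mu + f) * (y * y / (r * tp)) <= ((1 + 2 * r) / (1 + r) - F) * (y * y / (r * tp)))
    by (apply Rmult_le_compat_r; auto; lra).
  nra.
Qed.

Section BDF2Form.
Variables (t : nat -> R) (N : nat).
Hypothesis Hinc : forall k : nat, (1 <= k <= N)%nat -> t (k - 1)%nat < t k.
Variable rmax : R.
Hypothesis Hrmax_pos : 0 < rmax.
Hypothesis Hrmax_root : rmax ^ 3 = (2 * rmax + 1) ^ 2.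
Variable delta : R.
Hypothesis Hdelta : 0 < delta < rmax.
Hypothesis Hrk : forall k : nat, (3 <= k <= N)%nat -> 0 < ratio t k <= rmax - delta.

Definition fmax : R := young_weight (sqrt (rmax - delta)).
Definition form_mu : R := Cr rmax * delta / 2.
Definition start_weight : R := (1 - fmax) / 2.
Definition form_nu : R := ratio t 2 / (4 * start_weight).

Definition bdf2_form (y : nat -> R) (m : nat) : R :=
  sumR 1 m (fun k => bdf2 t k 0 * (y k * y k) + bdf2 t k 1 * (y k * y (k - 1)%nat)).
Definition scaled_sq (y : nat -> R) (m : nat) : R :=
  sumR 1 m (fun k => if Nat.leb 2 k then y k * y k / tau t k else 0).

Lemma fmax_nonneg : 0 <= fmax.
Proof. apply young_weight_nonneg, sqrt_pos. Qed.

Lemma form_mu_pos : 0 < form_mu.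
Proof. unfold form_mu. pose proof (Cr_pos rmax Hrmax_pos). apply Rdiv_lt_0_compat; nra. Qed.

Lemma start_weight_ge : 1 / (4 * (1 + rmax)) <= start_weight.
Proof.
  unfold start_weight, fmax. pose proof (young_weight_rmax_le rmax Hrmax_pos Hrmax_root delta Hdelta).
  replace (1 / (4 * (1 + rmax))) with ((1 / (2 * (1 + rmax))) / 2) by (field; lra). lra.
Qed.

Lemma start_weight_pos : 0 < start_weight.
Proof. pose proof start_weight_ge. assert (0 < 1 / (4 * (1 + rmax))) by (apply Rdiv_lt_0_compat; lra). lra. Qed.

Lemma form_nu_nonneg : (2 <= N)%nat -> 0 <= form_nu.
Proof.
  intros. unfold form_nu. pose proof (ratio_pos t N Hinc 2 ltac:(lia)). pose proof start_weight_pos.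
  apply Rlt_le, Rdiv_lt_0_compat; lra.
Qed.

Lemma form_nu_le : (2 <= N)%nat -> form_nu <= ratio t 2 * (1 + rmax).
Proof.
  intros. unfold form_nu. pose proof (ratio_pos t N Hinc 2 ltac:(lia)).
  pose proof start_weight_pos. pose proof start_weight_ge.
  apply Rmult_le_reg_r with (4 * start_weight); [lra|]. unfold Rdiv. rewrite Rmult_assoc, Rinv_l by lra.
  assert (1 <= (1 + rmax) * (4 * start_weight)).
  { replace 1 with (1 / (4 * (1 + rmax)) * (4 * (1 + rmax))) at 1 by (field; lra). nra. }
  nra.
Qed.

Lemma form_mu_fmax_le : form_mu + fmax <= 1 - start_weight.
Proof.
  unfold form_mu, start_weight. pose proof (Cr_delta_le rmax Hrmax_pos Hrmax_root delta Hdelta). unfold fmax in *. lra.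
Qed.

(* The extra term [fmax * y m ^ 2 / tau m] pays for the off-diagonal Young
   inequality of the next step. *)
Lemma bdf2_form_lower_bound_from_2 y m : (2 <= m <= N)%nat -> (forall k, 0 <= y k) ->
  form_mu * scaled_sq y m - form_nu * (y 1%nat * y 1%nat / tau t 1) + fmax * (y m * y m / tau t m)
  <= bdf2_form y m.
Proof.
  intros Hm Hy. pose proof (tau_pos t N Hinc 1 ltac:(lia)) as T1.
  pose proof (ratio_pos t N Hinc 2 ltac:(lia)) as R2. pose proof start_weight_pos as Hs.
  induction m as [|m IH]; [lia|].
  unfold bdf2_form, scaled_sq in *. rewrite !sumR_recr by lia.
  replace (Nat.leb 2 (S m)) with true by (symmetry; apply Nat.leb_le; lia).
  rewrite bdf2_ge2_0, bdf2_ge2_1, (tau_ratio t N Hinc (S m)) by lia.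
  replace (S m - 1)%nat with m by lia.
  destruct (Nat.eq_dec m 1) as [->|Hm1].
  - rewrite !sumR_recr, !sumR_empty by lia. simpl Nat.leb. cbv iota.
    rewrite bdf2_1_1, bdf2_1_0.
    pose proof (bdf2_form_start (tau t 1) (ratio t 2) (y 1%nat) (y 2%nat) start_weight form_nu form_mu fmax
                  T1 R2 (Hy _) (Hy _) Hs eq_refl form_mu_fmax_le).
    replace (1 / tau t 1 * (y 1%nat * y 1%nat)) with (y 1%nat * y 1%nat / tau t 1) by (field; lra).
    lra.
  - specialize (IH ltac:(lia)).
    pose proof (Hrk (S m) ltac:(lia)) as Hr. set (r := ratio t (S m)) in *.
    pose proof (tau_pos t N Hinc m ltac:(lia)) as Tm.
    assert (HF : young_weight (sqrt r) <= fmax).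
    { apply young_weight_le_compat. split; [apply sqrt_pos | apply sqrt_le_1_alt; lra]. }
    pose proof (bdf2_offdiag_young r (tau t m) (y (S m)) (y m) ltac:(lra) Tm (Hy _) (Hy _)) as Hyoung.
    pose proof (bdf2_margin rmax Hrmax_pos Hrmax_root delta Hdelta r Hr) as Hmargin.
    pose proof (bdf2_form_step r (tau t m) (y (S m)) (y m) (young_weight (sqrt r)) fmax form_mu
                  ltac:(lra) Tm (Hy _) (Hy _) HF Hyoung ltac:(unfold form_mu, fmax in *; lra)).
    lra.
Qed.

Lemma bdf2_form_lower_bound y m : (2 <= N)%nat -> (1 <= m <= N)%nat -> (forall k, 0 <= y k) ->
  form_mu * scaled_sq y m - form_nu * (y 1%nat * y 1%nat / tau t 1) <= bdf2_form y m.
Proof.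
  intros HN Hm Hy. pose proof (tau_pos t N Hinc 1 ltac:(lia)) as T1.
  pose proof form_mu_pos. pose proof fmax_nonneg. pose proof (form_nu_nonneg HN).
  destruct (Nat.eq_dec m 1) as [->|].
  - unfold bdf2_form, scaled_sq. rewrite !sumR_recr, !sumR_empty by lia. simpl Nat.leb. cbv iota.
    rewrite bdf2_1_1, bdf2_1_0.
    assert (0 <= y 1%nat * y 1%nat / tau t 1) by (apply Rmult_le_pos; [nra | left; apply Rinv_0_lt_compat; lra]).
    replace (1 / tau t 1 * (y 1%nat * y 1%nat)) with (y 1%nat * y 1%nat / tau t 1) by (field; lra). nra.
  - pose proof (bdf2_form_lower_bound_from_2 y m ltac:(lia) Hy). pose proof (tau_pos t N Hinc m ltac:(lia)).
    assert (0 <= fmax * (y m * y m / tau t m)).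
    { apply Rmult_le_pos; auto. apply Rmult_le_pos; [nra | left; apply Rinv_0_lt_compat; lra]. }
    lra.
Qed.

End BDF2Form.

(* Young's inequality on [F W] and [|c2| Y W] absorbs both into [c1 W ^ 2]. *)
Lemma sqr_le_of_energy_step Y Z W F tau c1 c2 c3 :
  0 < c1 -> 0 <= tau -> 0 <= Y -> 0 <= Z -> 0 <= W -> 0 <= F ->
  tau * (c2 ^ 2 / (2 * c1) + Rabs c3) <= 1 / 4 ->
  Y * Y - Y * Z <= tau * (F * W - c1 * (W * W) + Rabs c2 * (Y * W) + Rabs c3 * (Y * Y)) ->
  Y * Y <= 2 * (Z * Z) + 2 * tau * (F * F) / c1.
Proof.
  intros Hc1 Ht HY HZ HW HF Hsmall Hstep.
  assert (Y1 : F * W <= c1 * (W * W) / 2 + F * F / (2 * c1)).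
  { assert (c1 * (W * W) / 2 + F * F / (2 * c1) - F * W = (c1 * W - F) ^ 2 / (2 * c1)) by (field; lra).
    assert (0 <= (c1 * W - F) ^ 2 / (2 * c1))
      by (apply Rmult_le_pos; [apply pow2_ge_0 | left; apply Rinv_0_lt_compat; lra]).
    lra. }
  assert (Y2 : Rabs c2 * (Y * W) <= c1 * (W * W) / 2 + c2 ^ 2 / (2 * c1) * (Y * Y)).
  { assert (Hc2 : c2 ^ 2 = Rabs c2 * Rabs c2) by (rewrite <- pow2_abs; ring).
    assert (c1 * (W * W) / 2 + c2 ^ 2 / (2 * c1) * (Y * Y) - Rabs c2 * (Y * W)
            = (c1 * W - Rabs c2 * Y) ^ 2 / (2 * c1)) by (rewrite Hc2; field; lra).
    assert (0 <= (c1 * W - Rabs c2 * Y) ^ 2 / (2 * c1))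
      by (apply Rmult_le_pos; [apply pow2_ge_0 | left; apply Rinv_0_lt_compat; lra]).
    lra. }
  assert (Y * Y - Y * Z <= tau * (F * F / (2 * c1)) + tau * (c2 ^ 2 / (2 * c1) + Rabs c3) * (Y * Y)).
  { assert (tau * (F * W - c1 * (W * W) + Rabs c2 * (Y * W) + Rabs c3 * (Y * Y))
            <= tau * (F * F / (2 * c1) + (c2 ^ 2 / (2 * c1) + Rabs c3) * (Y * Y)))
      by (apply Rmult_le_compat_l; lra).
    lra. }
  assert (tau * (c2 ^ 2 / (2 * c1) + Rabs c3) * (Y * Y) <= 1 / 4 * (Y * Y)) by (apply Rmult_le_compat_r; nra).
  assert (0 <= (Y - Z) * (Y - Z)) by apply Rle_0_sqr.
  assert (Y * Z <= Y * Y / 2 + Z * Z / 2) by lra.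
  replace (2 * tau * (F * F) / c1) with (4 * (tau * (F * F / (2 * c1)))) by (field; lra).
  lra.
Qed.

Lemma two_sqrt_nu_le r nu rmax : 0 < r -> 0 <= nu <= r * (1 + rmax) -> rmax < 4.885 ->
  2 * sqrt nu <= 5 * (1 + r ^ 2 / (1 + 2 * r)).
Proof.
  intros Hr Hnu Hrmax.
  replace (1 + r ^ 2 / (1 + 2 * r)) with ((1 + r) ^ 2 / (1 + 2 * r)) by (field; lra).
  assert (0 <= (1 + r) ^ 2 / (1 + 2 * r)) by (apply Rmult_le_pos; [apply pow2_ge_0 | left; apply Rinv_0_lt_compat; lra]).
  replace (2 * sqrt nu) with (sqrt (4 * nu))
    by (rewrite sqrt_mult_alt, <- (sqrt_square 2) by lra; f_equal; f_equal; ring).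
  apply sqrt_le_of_le_sqr; [lra|].
  apply Rle_trans with (4 * r * 5.885); [nra|].
  replace (5 * ((1 + r) ^ 2 / (1 + 2 * r)) * (5 * ((1 + r) ^ 2 / (1 + 2 * r))))
    with (25 * (1 + r) ^ 4 / ((1 + 2 * r) * (1 + 2 * r))) by (field; lra).
  apply Rmult_le_reg_r with ((1 + 2 * r) * (1 + 2 * r)); [nra|].
  replace (25 * (1 + r) ^ 4 / ((1 + 2 * r) * (1 + 2 * r)) * ((1 + 2 * r) * (1 + 2 * r)))
    with (25 * (1 + r) ^ 4) by (field; lra).
  nra.
Qed.

Lemma sqrt_start_term_le c1 nu tau1 T s r rmax delta :
  0 < c1 -> 0 < r -> 0 <= nu <= r * (1 + rmax) -> 0 <= tau1 <= T -> 0 <= s ->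
  4.84 < rmax -> 0 < delta < rmax ->
  sqrt (4 * c1 * nu * tau1 * (s * s))
  <= 4 * (rmax ^ 2 * sqrt rmax) / delta * sqrt (c1 * r) * sqrt T * s.
Proof.
  intros Hc1 Hr Hnu Htau Hs Hrmax Hdelta.
  set (K := 4 * (rmax ^ 2 * sqrt rmax) / delta).
  assert (HK : 0 <= K).
  { unfold K. apply Rmult_le_pos; [|left; apply Rinv_0_lt_compat; lra].
    apply Rmult_le_pos; [lra | apply Rmult_le_pos; [apply pow2_ge_0 | apply sqrt_pos]]. }
  apply sqrt_le_of_le_sqr.
  { apply Rmult_le_pos; [|exact Hs]. apply Rmult_le_pos; [|apply sqrt_pos].
    apply Rmult_le_pos; [exact HK | apply sqrt_pos]. }
  replace (K * sqrt (c1 * r) * sqrt T * s * (K * sqrt (c1 * r) * sqrt T * s))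
    with ((K * K) * (sqrt (c1 * r) * sqrt (c1 * r)) * (sqrt T * sqrt T) * (s * s)) by ring.
  rewrite !sqrt_sqrt by nra.
  assert (KK : K * K = 16 * rmax ^ 5 / (delta * delta)).
  { unfold K. replace (4 * (rmax ^ 2 * sqrt rmax) / delta * (4 * (rmax ^ 2 * sqrt rmax) / delta))
      with (16 * rmax ^ 4 * (sqrt rmax * sqrt rmax) / (delta * delta)) by (field; lra).
    rewrite sqrt_sqrt by lra. field. lra. }
  rewrite KK.
  assert (R5 : 4 * (1 + rmax) <= 16 * rmax ^ 5 / (delta * delta)).
  { apply Rmult_le_reg_r with (delta * delta); [nra|].
    replace (16 * rmax ^ 5 / (delta * delta) * (delta * delta)) with (16 * rmax ^ 5) by (field; lra).
    assert (delta * delta <= rmax * rmax) by nra.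
    assert (4 * (1 + rmax) <= 16 * rmax ^ 3) by nra.
    assert (0 <= 4 * (1 + rmax)) by lra.
    replace (16 * rmax ^ 5) with (16 * rmax ^ 3 * (rmax * rmax)) by ring.
    apply Rmult_le_compat; nra. }
  assert (0 <= c1 * r * T * (s * s)) by (apply Rmult_le_pos; [apply Rmult_le_pos|]; nra).
  apply Rle_trans with (4 * (1 + rmax) * (c1 * r * T * (s * s))).
  - replace (4 * c1 * nu * tau1 * (s * s)) with (4 * c1 * (s * s) * (nu * tau1)) by ring.
    replace (4 * (1 + rmax) * (c1 * r * T * (s * s))) with (4 * c1 * (s * s) * ((r * (1 + rmax)) * T)) by ring.
    apply Rmult_le_compat_l; [nra | apply Rmult_le_compat; lra].
  - replace (16 * rmax ^ 5 / (delta * delta) * (c1 * r) * T * (s * s))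
      with (16 * rmax ^ 5 / (delta * delta) * (c1 * r * T * (s * s))) by ring.
    apply Rmult_le_compat_r; lra.
Qed.

Section Scheme.
Variables (N : nat) (t : nat -> R).
Hypothesis Hinc : forall k : nat, (1 <= k <= N)%nat -> t (k - 1)%nat < t k.
Variable M : nat.
Hypothesis HM : (2 <= M)%nat.
Variables xl xr : R.
Hypothesis Hx : xl < xr.
Variables c1 c2 c3 : R.
Hypothesis Hc1 : 0 < c1.
Variable rho : R -> R.
Variable CJ : R.
Hypothesis HCJ : 0 < CJ.

Let h := hstep xl xr M.

Hypothesis HJ : forall v : nat -> R, in_Vh M v -> nrm h M (Jh rho xl xr M v) <= CJ * nrm h M v.
Variables phi zeta : nat -> nat -> R.
Hypothesis Hphi : forall n : nat, (n <= N)%nat -> in_Vh M (phi n).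
Hypothesis Hscheme : forall n i : nat, (1 <= n <= N)%nat -> (1 <= i <= M - 1)%nat ->
  sumR 1 n (fun k => bdf2 t n (n - k)%nat * (phi k i - phi (k - 1)%nat i))
  - c1 * lapl h (phi n) i + c2 * grad h (phi n) i + c3 * phi n i
  + Jh rho xl xr M (Ephi t phi n) i = zeta n i.

Lemma h_pos : 0 < h.
Proof. unfold h, hstep. apply Rdiv_lt_0_compat; [lra | apply lt_0_INR; lia]. Qed.

Definition rhs (k : nat) : nat -> R := fun i => zeta k i - Jh rho xl xr M (Ephi t phi k) i.
Definition dphi (k : nat) : nat -> R := fun i => phi k i - phi (k - 1)%nat i.
Definition psi (k : nat) : nat -> R := fun i => bdf2_inv t (fun j => phi j i) k.
Definition rhs_psi (k : nat) : nat -> R := fun i => bdf2_inv t (fun j => rhs j i) k.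

Lemma scheme_bidiagonal k i : (1 <= k <= N)%nat -> (1 <= i <= M - 1)%nat ->
  bdf2 t k 0 * dphi k i + bdf2 t k 1 * dphi (k - 1)%nat i
  = rhs k i + c1 * lapl h (phi k) i - c2 * grad h (phi k) i - c3 * phi k i.
Proof.
  intros Hk Hi. pose proof (Hscheme k i Hk Hi) as E. unfold rhs.
  assert (Hsum : sumR 1 k (fun j => bdf2 t k (k - j)%nat * (phi j i - phi (j - 1)%nat i))
                 = bdf2 t k 0 * dphi k i + bdf2 t k 1 * dphi (k - 1)%nat i).
  { destruct k as [|[|k]]; [lia| |].
    - rewrite sumR_recr, sumR_empty by lia. unfold dphi. simpl. rewrite bdf2_1_1. ring.
    - rewrite !sumR_recr, sumR_zero by (try lia; intros; rewrite bdf2_high by lia; ring).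
      rewrite Nat.sub_diag. replace (S (S k) - S k)%nat with 1%nat by lia.
      unfold dphi. replace (S (S k) - 1)%nat with (S k) by lia. ring. }
  lra.
Qed.

(* Applying [bdf2_inv] to the scheme turns the BDF2 difference quotient into
   the plain increment [phi k - phi (k - 1)]. *)
Lemma dphi_psi k i : (k <= N)%nat -> (1 <= i <= M - 1)%nat ->
  dphi k i = rhs_psi k i + c1 * lapl h (psi k) i - c2 * grad h (psi k) i - c3 * psi k i.
Proof.
  intros Hk Hi. induction k as [|k IH].
  - unfold dphi, rhs_psi, psi, lapl, grad. simpl. unfold Rdiv. ring.
  - change (psi (S k)) with (fun i => kappa t (S k) * phi (S k) i + eta t (S k) * psi k i).
    change (rhs_psi (S k) i) with (kappa t (S k) * rhs (S k) i + eta t (S k) * rhs_psi k i).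
    rewrite lapl_lin, grad_lin by apply h_pos.
    pose proof (scheme_bidiagonal (S k) i ltac:(lia) Hi) as E. replace (S k - 1)%nat with k in E by lia.
    pose proof (bdf2_diag_pos t N Hinc (S k) ltac:(lia)).
    assert (Hk1 : kappa t (S k) * bdf2 t (S k) 0 = 1) by (unfold kappa; field; lra).
    assert (He : eta t (S k) = - kappa t (S k) * bdf2 t (S k) 1) by (unfold kappa, eta; field; lra).
    replace (dphi (S k) i) with (kappa t (S k) * (bdf2 t (S k) 0 * dphi (S k) i + bdf2 t (S k) 1 * dphi k i)
                                 - kappa t (S k) * bdf2 t (S k) 1 * dphi k i)
      by (rewrite Rmult_plus_distr_l, <- Rmult_assoc, Hk1; ring).
    rewrite E, He, (IH ltac:(lia)). ring.
Qed.

Lemma ip_dphi k w : (k <= N)%nat ->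
  ip h M (dphi k) w = ip h M (rhs_psi k) w + c1 * ip h M (lapl h (psi k)) w
    - c2 * ip h M (grad h (psi k)) w - c3 * ip h M (psi k) w.
Proof.
  intros Hk. rewrite <- ip_combination. apply ip_ext. intros. split; [|reflexivity].
  now apply dphi_psi.
Qed.

Lemma psi_Vh k : (k <= N)%nat -> in_Vh M (psi k).
Proof.
  induction k as [|k IH]; intros Hk; [split; reflexivity|].
  apply in_Vh_lin; [apply Hphi | apply IH]; lia.
Qed.

Lemma Ephi_Vh j : (j <= N)%nat -> in_Vh M (Ephi t phi j).
Proof.
  intros. unfold Ephi. destruct (Nat.leb j 1); [apply Hphi; lia|].
  destruct (Hphi (j - 1) ltac:(lia)) as [A1 B1], (Hphi (j - 2) ltac:(lia)) as [A2 B2].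
  split; rewrite ?A1, ?B1, ?A2, ?B2; ring.
Qed.

Lemma energy_telescope m :
  ip h M (phi m) (phi m) - ip h M (phi 0%nat) (phi 0%nat) <= sumR 1 m (fun k => 2 * ip h M (dphi k) (phi k)).
Proof.
  induction m as [|m IH]; [rewrite sumR_empty by lia; lra|].
  rewrite sumR_recr by lia.
  assert (Hd : forall w, ip h M (dphi (S m)) w = ip h M (phi (S m)) w - ip h M (phi m) w).
  { intros w. rewrite (ip_ext h M (dphi (S m)) (fun i => 1 * phi (S m) i + (-1) * phi m i) w w)
      by (intros; split; [unfold dphi; simpl; rewrite Nat.sub_0_r; ring | reflexivity]).
    rewrite ip_lin. ring. }
  pose proof (ip_nonneg h M h_pos (dphi (S m))) as Hsq.
  rewrite Hd, !(ip_sym h M _ (dphi (S m))), !Hd, (ip_sym h M (phi m) (phi (S m))) in Hsq.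
  rewrite Hd, (ip_sym h M (phi m) (phi (S m))). lra.
Qed.

Definition nphi (k : nat) : R := nrm h M (phi k).

Fixpoint nphi_max (k : nat) : R :=
  match k with 0 => nphi 0 | S k' => Rmax (nphi_max k') (nphi (S k')) end.

Lemma nphi_nonneg k : 0 <= nphi k.
Proof. apply nrm_nonneg. Qed.

Lemma nphi_max_mono j k : (j <= k)%nat -> nphi_max j <= nphi_max k.
Proof. induction 1; simpl; [lra | eapply Rle_trans; [eassumption | apply Rmax_l]]. Qed.

Lemma nphi_le_max j k : (j <= k)%nat -> nphi j <= nphi_max k.
Proof.
  intros. apply Rle_trans with (nphi_max j); [destruct j; simpl; [lra | apply Rmax_r]|].
  now apply nphi_max_mono.
Qed.

Lemma nphi_max_nonneg k : 0 <= nphi_max k.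
Proof. apply Rle_trans with (nphi 0); [apply nphi_nonneg | apply nphi_le_max; lia]. Qed.

Lemma nrm_bdf2_inv_le (g : nat -> nat -> R) k : (k <= N)%nat ->
  nrm h M (fun i => bdf2_inv t (fun j => g j i) k) <= bdf2_inv t (fun j => nrm h M (g j)) k.
Proof.
  induction k as [|k IH]; intros Hk; simpl; [rewrite nrm_zero; lra|].
  pose proof (kappa_pos t N Hinc (S k) ltac:(lia)). pose proof (eta_nonneg t N Hinc (S k) ltac:(lia)).
  eapply Rle_trans; [apply (nrm_lin_le h M h_pos)|].
  rewrite !Rabs_right by lra. specialize (IH ltac:(lia)). nra.
Qed.

Lemma nrm_psi_le k : (k <= N)%nat -> nrm h M (psi k) <= tau t k * nphi_max k.
Proof.
  intros Hk. eapply Rle_trans; [apply (nrm_bdf2_inv_le phi k Hk)|].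
  apply (bdf2_inv_le t N Hinc); auto. intros. apply nphi_le_max. lia.
Qed.

Definition rhs_conv (k : nat) : R := bdf2_inv t (fun j => nrm h M (rhs j)) k.

Lemma rhs_conv_nonneg k : (k <= N)%nat -> 0 <= rhs_conv k.
Proof. intros. apply bdf2_inv_nonneg with (N := N); auto. intros. apply nrm_nonneg. Qed.

Lemma semi1_sqr u : in_Vh M u -> semi1 h M u * semi1 h M u = aform h M u u.
Proof. intros. apply sqrt_sqrt, aform_nonneg; auto using h_pos; lia. Qed.

(* The diffusion term is tested against [phi k = b0 psi k + b1 psi (k - 1)];
   for [k = 1], [psi 1] is a multiple of [phi 1], so the convection term vanishes. *)
Lemma energy_term_le k : (1 <= k <= N)%nat ->
  2 * ip h M (dphi k) (phi k) <=
    2 * rhs_conv k * nphi k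
    - 2 * c1 * (bdf2 t k 0 * (semi1 h M (psi k) * semi1 h M (psi k))
                + bdf2 t k 1 * (semi1 h M (psi k) * semi1 h M (psi (k - 1)%nat)))
    + (if Nat.leb 2 k then 2 * Rabs c2 * semi1 h M (psi k) * nphi k else 0)
    + 2 * Rabs c3 * (tau t k * nphi_max k) * nphi k.
Proof.
  intros Hk. pose proof h_pos as Hh. rewrite ip_dphi, ip_lapl by lia.
  assert (Hf : ip h M (rhs_psi k) (phi k) <= rhs_conv k * nphi k).
  { eapply Rle_trans; [apply (ip_le h M Hh)|]. apply Rmult_le_compat_r; [apply nphi_nonneg|].
    apply nrm_bdf2_inv_le. lia. }
  assert (Ha : bdf2 t k 0 * (semi1 h M (psi k) * semi1 h M (psi k))
               + bdf2 t k 1 * (semi1 h M (psi k) * semi1 h M (psi (k - 1)%nat))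
               <= aform h M (psi k) (phi k)).
  { unfold aform at 1. rewrite (ip_ext h M _ (fun i => - lapl h (psi k) i) (phi k)
               (fun i => bdf2 t k 0 * psi k i + bdf2 t k 1 * psi (k - 1)%nat i))
      by (intros; split; [reflexivity | apply (bdf2_inv_spec t N Hinc (fun j => phi j i) k Hk)]).
    fold (aform h M (psi k) (fun i => bdf2 t k 0 * psi k i + bdf2 t k 1 * psi (k - 1)%nat i)).
    rewrite aform_lin_r, semi1_sqr by (apply psi_Vh; lia).
    pose proof (Rabs_aform_le h M Hh ltac:(lia) (psi k) (psi (k - 1)%nat)
                  (psi_Vh k ltac:(lia)) (psi_Vh (k - 1) ltac:(lia))).
    pose proof (bdf2_offdiag_nonpos t N Hinc k Hk).
    pose proof (Rle_abs (aform h M (psi k) (psi (k - 1)%nat))).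
    unfold semi1. fold (aform h M (psi k) (psi k)) (aform h M (psi (k - 1)%nat) (psi (k - 1)%nat)).
    nra. }
  assert (Hc : - c2 * ip h M (grad h (psi k)) (phi k)
               <= if Nat.leb 2 k then Rabs c2 * semi1 h M (psi k) * nphi k else 0).
  { destruct (Nat.leb_spec 2 k).
    - rewrite Rmult_assoc. apply neg_mul_le_abs. eapply Rle_trans; [apply (Rabs_ip_le h M Hh)|].
      apply Rmult_le_compat_r; [apply nphi_nonneg|]. apply sqrt_le_1_alt.
      apply ip_grad_le_aform; [auto | lia | apply psi_Vh; lia].
    - replace k with 1%nat by lia.
      rewrite (ip_ext h M (grad h (psi 1)) (fun i => kappa t 1 * grad h (phi 1%nat) i + eta t 1 * grad h (psi 0%nat) i)
                 (phi 1%nat) (phi 1%nat)) by (intros; split; [apply grad_lin; auto | reflexivity]).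
      rewrite ip_lin, ip_grad_self, eta_1; [lra | auto | lia | apply Hphi; lia]. }
  assert (Hr : - c3 * ip h M (psi k) (phi k) <= Rabs c3 * (tau t k * nphi_max k * nphi k)).
  { apply neg_mul_le_abs. eapply Rle_trans; [apply (Rabs_ip_le h M Hh)|].
    apply Rmult_le_compat_r; [apply nphi_nonneg | apply nrm_psi_le; lia]. }
  destruct (Nat.leb 2 k); nra.
Qed.

Variable rmax : R.
Hypothesis Hrmax_pos : 0 < rmax.
Hypothesis Hrmax_root : rmax ^ 3 = (2 * rmax + 1) ^ 2.
Variable delta : R.
Hypothesis Hdelta : 0 < delta < rmax.
Hypothesis Hrk : forall k : nat, (3 <= k <= N)%nat -> 0 < ratio t k <= rmax - delta.

Let mu := form_mu rmax delta.
Let nu := form_nu t rmax delta.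

Definition lam : R := c2 ^ 2 / (2 * c1 * mu) + 2 * Rabs c3.
Definition growth_sum (m : nat) : R :=
  2 * sumR 1 m rhs_conv + lam * sumR 1 m (fun k => tau t k * nphi_max k).

Lemma lam_nonneg : 0 <= lam.
Proof.
  unfold lam. pose proof (form_mu_pos rmax Hrmax_pos delta Hdelta). pose proof (Rabs_pos c3).
  assert (0 <= c2 ^ 2 / (2 * c1 * mu))
    by (apply Rmult_le_pos; [apply pow2_ge_0 | left; apply Rinv_0_lt_compat; unfold mu; nra]).
  lra.
Qed.

(* Young's inequality splits the convection term between the coercive part
   [mu * scaled_sq] of the BDF2 form and [lam * tau k * nphi_max k]. *)
Lemma energy_terms_le m : (m <= N)%nat ->
  sumR 1 m (fun k => 2 * rhs_conv k * nphi k
                     + (if Nat.leb 2 k then 2 * Rabs c2 * semi1 h M (psi k) * nphi k else 0)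
                     + 2 * Rabs c3 * (tau t k * nphi_max k) * nphi k)
  <= 2 * c1 * mu * scaled_sq t (fun k => semi1 h M (psi k)) m + nphi_max m * growth_sum m.
Proof.
  intros Hm. pose proof (form_mu_pos rmax Hrmax_pos delta Hdelta) as Hmu. fold mu in Hmu.
  apply Rle_trans with (sumR 1 m (fun k =>
    2 * c1 * mu * (if Nat.leb 2 k then semi1 h M (psi k) * semi1 h M (psi k) / tau t k else 0)
    + nphi_max m * (2 * rhs_conv k + lam * (tau t k * nphi_max k)))).
  2:{ unfold scaled_sq, growth_sum. rewrite !sumR_plus, !sumR_scal, sumR_plus, !sumR_scal. lra. }
  apply sumR_le. intros k Hk. unfold lam.
  set (y := semi1 h M (psi k)).
  pose proof (tau_pos t N Hinc k ltac:(lia)) as Tk.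
  pose proof (nphi_le_max k m ltac:(lia)). pose proof (nphi_le_max k k ltac:(lia)). pose proof (nphi_nonneg k).
  pose proof (rhs_conv_nonneg k ltac:(lia)). pose proof (nphi_max_nonneg k). pose proof (nphi_max_nonneg m).
  pose proof (Rabs_pos c3).
  assert (0 <= c2 ^ 2 / (2 * c1 * mu)) by (apply Rmult_le_pos; [apply pow2_ge_0 | left; apply Rinv_0_lt_compat; nra]).
  assert (Hconv : (if Nat.leb 2 k then 2 * Rabs c2 * y * nphi k else 0)
                  <= 2 * c1 * mu * (if Nat.leb 2 k then y * y / tau t k else 0)
                     + nphi_max m * (c2 ^ 2 / (2 * c1 * mu) * (tau t k * nphi_max k))).
  { assert (0 <= nphi_max m * (c2 ^ 2 / (2 * c1 * mu) * (tau t k * nphi_max k)))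
      by (apply Rmult_le_pos; [lra | apply Rmult_le_pos; nra]).
    destruct (Nat.leb 2 k); [|lra].
    pose proof (young_abs (2 * c1 * mu / tau t k) c2 y (nphi k) ltac:(apply Rdiv_lt_0_compat; nra)) as Hy.
    replace (c2 ^ 2 * (nphi k * nphi k) / (2 * c1 * mu / tau t k))
      with (c2 ^ 2 / (2 * c1 * mu) * (tau t k * (nphi k * nphi k))) in Hy by (field; lra).
    replace (2 * c1 * mu / tau t k * (y * y)) with (2 * c1 * mu * (y * y / tau t k)) in Hy by (field; lra).
    assert (nphi k * nphi k <= nphi_max k * nphi_max m) by nra.
    assert (c2 ^ 2 / (2 * c1 * mu) * (tau t k * (nphi k * nphi k))
            <= nphi_max m * (c2 ^ 2 / (2 * c1 * mu) * (tau t k * nphi_max k))).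
    { replace (nphi_max m * (c2 ^ 2 / (2 * c1 * mu) * (tau t k * nphi_max k)))
        with (c2 ^ 2 / (2 * c1 * mu) * (tau t k * (nphi_max k * nphi_max m))) by ring.
      apply Rmult_le_compat_l; [lra|]. apply Rmult_le_compat_l; lra. }
    lra. }
  assert (2 * rhs_conv k * nphi k <= nphi_max m * (2 * rhs_conv k)) by nra.
  assert (2 * Rabs c3 * (tau t k * nphi_max k) * nphi k <= nphi_max m * (2 * Rabs c3 * (tau t k * nphi_max k))).
  { assert (0 <= 2 * Rabs c3 * (tau t k * nphi_max k)) by (apply Rmult_le_pos; nra).
    rewrite (Rmult_comm (nphi_max m)). apply Rmult_le_compat_l; lra. }
  nra.
Qed.

Definition a11 : R := aform h M (phi 1%nat) (phi 1%nat).

Lemma a11_nonneg : (1 <= N)%nat -> 0 <= a11.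
Proof. intros. apply aform_nonneg; [apply h_pos | lia | apply Hphi; lia]. Qed.

Lemma semi1_psi_1 : (1 <= N)%nat ->
  semi1 h M (psi 1) * semi1 h M (psi 1) / tau t 1 = tau t 1 * a11.
Proof.
  intros HN. pose proof (tau_pos t N Hinc 1 ltac:(lia)).
  rewrite semi1_sqr by (apply psi_Vh; lia).
  change (psi 1) with (fun i => kappa t 1 * phi 1%nat i + eta t 1 * psi 0%nat i).
  rewrite aform_lin, !aform_lin_r, eta_1 by apply h_pos.
  unfold a11, kappa. rewrite bdf2_1_0. field. lra.
Qed.

Lemma energy_level m : (2 <= N)%nat -> (1 <= m <= N)%nat ->
  nphi m * nphi m <= nphi 0 * nphi 0 + 2 * c1 * nu * tau t 1 * a11 + nphi_max m * growth_sum m.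
Proof.
  intros HN Hm.
  set (y := fun k => semi1 h M (psi k)).
  pose proof (energy_telescope m) as E. unfold nphi. rewrite !nrm_sqr by apply h_pos.
  assert (Hterms : sumR 1 m (fun k => 2 * ip h M (dphi k) (phi k))
      <= sumR 1 m (fun k => 2 * rhs_conv k * nphi k
                            + (if Nat.leb 2 k then 2 * Rabs c2 * y k * nphi k else 0)
                            + 2 * Rabs c3 * (tau t k * nphi_max k) * nphi k)
         - 2 * c1 * bdf2_form t y m).
  { apply Rle_trans with (sumR 1 m (fun k =>
      (2 * rhs_conv k * nphi k + (if Nat.leb 2 k then 2 * Rabs c2 * y k * nphi k else 0)
       + 2 * Rabs c3 * (tau t k * nphi_max k) * nphi k)
      + (- 2 * c1) * (bdf2 t k 0 * (y k * y k) + bdf2 t k 1 * (y k * y (k - 1)%nat)))).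
    - apply sumR_le. intros k Hk. pose proof (energy_term_le k ltac:(lia)). unfold y. lra.
    - rewrite sumR_plus, sumR_scal. unfold bdf2_form. lra. }
  pose proof (energy_terms_le m ltac:(lia)) as Habs. fold y in Habs.
  pose proof (bdf2_form_lower_bound t N Hinc rmax Hrmax_pos Hrmax_root delta Hdelta Hrk y m HN Hm
                (fun k => sqrt_pos _)) as Hform. fold mu nu in Hform.
  replace (y 1%nat * y 1%nat / tau t 1) with (tau t 1 * a11) in Hform by (symmetry; apply semi1_psi_1; lia).
  assert (2 * c1 * (mu * scaled_sq t y m - nu * (tau t 1 * a11)) <= 2 * c1 * bdf2_form t y m)
    by (apply Rmult_le_compat_l; lra).
  unfold y in *. cbv beta in *. lra.
Qed.

Definition start_level : R := sqrt (nphi 0 * nphi 0 + 2 * c1 * nu * tau t 1 * a11).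

Lemma growth_sum_nonneg m : (m <= N)%nat -> 0 <= growth_sum m.
Proof.
  intros Hm. unfold growth_sum. pose proof lam_nonneg.
  assert (0 <= sumR 1 m rhs_conv) by (apply sumR_nonneg; intros; apply rhs_conv_nonneg; lia).
  assert (0 <= sumR 1 m (fun k => tau t k * nphi_max k)).
  { apply sumR_nonneg. intros. apply Rmult_le_pos; [left; apply (tau_pos t N Hinc); lia | apply nphi_max_nonneg]. }
  nra.
Qed.

Lemma growth_sum_le_S m : (S m <= N)%nat -> growth_sum m <= growth_sum (S m).
Proof.
  intros. unfold growth_sum. rewrite !sumR_recr by lia.
  pose proof (rhs_conv_nonneg (S m) H). pose proof lam_nonneg.
  pose proof (tau_pos t N Hinc (S m) ltac:(lia)). pose proof (nphi_max_nonneg (S m)).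
  assert (0 <= lam * (tau t (S m) * nphi_max (S m))) by (apply Rmult_le_pos; nra).
  lra.
Qed.

(* A new maximum [nphi m] satisfies [x ^ 2 <= a ^ 2 + x * B], hence [x <= a + B]. *)
Lemma nphi_max_le_level m : (2 <= N)%nat -> (m <= N)%nat -> nphi_max m <= start_level + growth_sum m.
Proof.
  intros HN Hm.
  pose proof (form_nu_nonneg t N Hinc rmax Hrmax_pos Hrmax_root delta Hdelta HN) as Hnu. fold nu in Hnu.
  pose proof (tau_pos t N Hinc 1 ltac:(lia)). pose proof (a11_nonneg ltac:(lia)).
  assert (0 <= 2 * c1 * nu * tau t 1 * a11) by (apply Rmult_le_pos; [apply Rmult_le_pos|]; nra).
  pose proof (nphi_nonneg 0).
  assert (Ha : 0 <= start_level) by apply sqrt_pos.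
  assert (Hsq : start_level * start_level = nphi 0 * nphi 0 + 2 * c1 * nu * tau t 1 * a11)
    by (apply sqrt_sqrt; nra).
  induction m as [|m IH].
  - assert (nphi 0 <= start_level) by nra.
    pose proof (growth_sum_nonneg 0 ltac:(lia)). simpl. lra.
  - simpl. specialize (IH ltac:(lia)). pose proof (growth_sum_le_S m Hm).
    apply Rmax_lub; [lra|].
    destruct (Rle_lt_dec (nphi (S m)) (nphi_max m)) as [|Hlt]; [lra|].
    assert (EV : nphi_max (S m) = nphi (S m)) by (simpl; rewrite Rmax_right; lra).
    pose proof (energy_level (S m) HN ltac:(lia)) as Hlev. rewrite EV in Hlev.
    apply le_of_sqr_le_add; [apply nphi_nonneg | exact Ha | apply growth_sum_nonneg; lia | lra].
Qed.

Lemma nrm_rhs_le j : (j <= N)%nat -> nrm h M (rhs j) <= nrm h M (zeta j) + CJ * nrm h M (Ephi t phi j).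
Proof.
  intros Hj. unfold rhs.
  rewrite (nrm_ext h M _ (fun i => 1 * zeta j i + (-1) * Jh rho xl xr M (Ephi t phi j) i)) by (intros; ring).
  eapply Rle_trans; [apply (nrm_lin_le h M h_pos)|].
  replace (Rabs (-1)) with 1 by (rewrite Rabs_left; lra). rewrite Rabs_R1.
  pose proof (HJ _ (Ephi_Vh j Hj)). lra.
Qed.

Lemma nrm_Ephi_lin j : (2 <= j)%nat ->
  nrm h M (Ephi t phi j) <= Rabs (1 + ratio t j) * nphi (j - 1) + Rabs (ratio t j) * nphi (j - 2).
Proof.
  intros Hj. unfold Ephi. replace (Nat.leb j 1) with false by (symmetry; apply Nat.leb_gt; lia).
  rewrite (nrm_ext h M _ (fun i => (1 + ratio t j) * phi (j - 1)%nat i + (- ratio t j) * phi (j - 2)%nat i))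
    by (intros; ring).
  rewrite <- (Rabs_Ropp (ratio t j)). apply (nrm_lin_le h M h_pos (1 + ratio t j) (- ratio t j)).
Qed.

Lemma nrm_Ephi_2 : (2 <= N)%nat -> nrm h M (Ephi t phi 2) <= (1 + ratio t 2) * nphi 1 + ratio t 2 * nphi 0.
Proof.
  intros HN. pose proof (ratio_pos t N Hinc 2 ltac:(lia)).
  pose proof (nrm_Ephi_lin 2 ltac:(lia)). rewrite !Rabs_right in H0 by lra. exact H0.
Qed.

Lemma nrm_Ephi_le j : (3 <= j <= N)%nat -> nrm h M (Ephi t phi j) <= (1 + 2 * rmax) * nphi_max j.
Proof.
  intros Hj. pose proof (Hrk j Hj). pose proof (nrm_Ephi_lin j ltac:(lia)).
  rewrite !Rabs_right in H0 by lra.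
  pose proof (nphi_le_max (j - 1) j ltac:(lia)). pose proof (nphi_le_max (j - 2) j ltac:(lia)).
  pose proof (nphi_nonneg (j - 1)). pose proof (nphi_nonneg (j - 2)). pose proof (nphi_max_nonneg j).
  nra.
Qed.

(* The extrapolation [Ephi] reaches back to the start-up values [phi 0], [phi 1]
   only for [j <= 2]; later it is bounded by the running maximum. *)
Definition Ehead (j : nat) : R :=
  if Nat.eqb j 1 then nphi 0 else if Nat.eqb j 2 then nrm h M (Ephi t phi 2) else 0.
Definition Etail (j : nat) : R := if Nat.leb 3 j then nphi_max j else 0.

Definition Zconv (k : nat) : R := bdf2_inv t (fun j => nrm h M (zeta j)) k.
Definition Econv (k : nat) : R := bdf2_inv t Ehead k.

Lemma Zconv_nonneg k : (k <= N)%nat -> 0 <= Zconv k.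
Proof. intros. apply bdf2_inv_nonneg with (N := N); auto. intros. apply nrm_nonneg. Qed.

Lemma Econv_nonneg k : (k <= N)%nat -> 0 <= Econv k.
Proof.
  intros. apply bdf2_inv_nonneg with (N := N); auto. intros. unfold Ehead.
  destruct (Nat.eqb j 1); [apply nphi_nonneg|]. destruct (Nat.eqb j 2); [apply nrm_nonneg | lra].
Qed.

Lemma rhs_conv_le k : (k <= N)%nat ->
  rhs_conv k <= Zconv k + CJ * Econv k + CJ * (1 + 2 * rmax) * (tau t k * nphi_max k).
Proof.
  intros Hk.
  assert (Hsplit : forall j, (1 <= j <= k)%nat ->
            nrm h M (rhs j) <= 1 * nrm h M (zeta j) + CJ * (1 * Ehead j + (1 + 2 * rmax) * Etail j)).
  { intros j Hj. eapply Rle_trans; [apply nrm_rhs_le; lia|]. unfold Ehead, Etail.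
    destruct (Nat.eqb_spec j 1) as [->|]; [change (nrm h M (Ephi t phi 1)) with (nphi 0); simpl; lra|].
    destruct (Nat.eqb_spec j 2) as [->|]; [simpl; lra|].
    replace (Nat.leb 3 j) with true by (symmetry; apply Nat.leb_le; lia).
    pose proof (nrm_Ephi_le j ltac:(lia)). nra. }
  unfold rhs_conv. eapply Rle_trans; [apply (bdf2_inv_le_compat t N Hinc _ _ k Hk Hsplit)|].
  rewrite bdf2_inv_lin, (bdf2_inv_lin t 1 (1 + 2 * rmax) Ehead Etail).
  fold (Zconv k) (Econv k).
  assert (bdf2_inv t Etail k <= tau t k * nphi_max k).
  { apply (bdf2_inv_le t N Hinc); auto. intros. unfold Etail.
    destruct (Nat.leb 3 j); [apply nphi_max_mono; lia | apply nphi_max_nonneg]. }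
  assert (CJ * ((1 + 2 * rmax) * bdf2_inv t Etail k) <= CJ * (1 + 2 * rmax) * (tau t k * nphi_max k)).
  { rewrite <- Rmult_assoc. apply Rmult_le_compat_l; [nra | auto]. }
  lra.
Qed.

Definition C1 : R := c2 ^ 2 / (c1 * Cr rmax * delta) + 2 * Rabs c3 + 2 * CJ * (1 + 2 * rmax).

Lemma C1_eq : C1 = lam + 2 * CJ * (1 + 2 * rmax).
Proof.
  unfold C1, lam, mu, form_mu. pose proof (Cr_pos rmax Hrmax_pos). field. split; lra.
Qed.
Definition source_level (n : nat) : R := start_level + 2 * sumR 1 n (fun k => Zconv k + CJ * Econv k).

Lemma source_level_nonneg n : (n <= N)%nat -> 0 <= source_level n.
Proof.
  intros. unfold source_level. pose proof (sqrt_pos (nphi 0 * nphi 0 + 2 * c1 * nu * tau t 1 * a11)).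
  assert (0 <= sumR 1 n (fun k => Zconv k + CJ * Econv k)).
  { apply sumR_nonneg. intros. pose proof (Zconv_nonneg i ltac:(lia)). pose proof (Econv_nonneg i ltac:(lia)). nra. }
  unfold start_level. lra.
Qed.

Lemma nphi_max_le_sources m n : (2 <= N)%nat -> (m <= n)%nat -> (n <= N)%nat ->
  nphi_max m <= source_level n + C1 * sumR 1 m (fun k => tau t k * nphi_max k).
Proof.
  intros HN Hmn Hn. pose proof (nphi_max_le_level m HN ltac:(lia)) as Hlev. unfold growth_sum in Hlev.
  assert (sumR 1 m rhs_conv <= sumR 1 m (fun k => Zconv k + CJ * Econv k)
                                + CJ * (1 + 2 * rmax) * sumR 1 m (fun k => tau t k * nphi_max k)).
  { rewrite <- sumR_scal, <- sumR_plus. apply sumR_le. intros. pose proof (rhs_conv_le i ltac:(lia)). lra. }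
  assert (sumR 1 m (fun k => Zconv k + CJ * Econv k) <= sumR 1 n (fun k => Zconv k + CJ * Econv k)).
  { apply sumR_le_upper; auto. intros.
    pose proof (Zconv_nonneg i ltac:(lia)). pose proof (Econv_nonneg i ltac:(lia)). nra. }
  rewrite C1_eq. unfold source_level. lra.
Qed.

Lemma ip_dphi_1 w : (1 <= N)%nat ->
  ip h M (dphi 1) w = tau t 1 * (ip h M (rhs 1) w + c1 * ip h M (lapl h (phi 1%nat)) w
                                 - c2 * ip h M (grad h (phi 1%nat)) w - c3 * ip h M (phi 1%nat) w).
Proof.
  intros HN. pose proof (tau_pos t N Hinc 1 ltac:(lia)).
  rewrite <- ip_combination, <- ip_scal. apply ip_ext. intros i Hi. split; [|reflexivity].
  pose proof (scheme_bidiagonal 1 i ltac:(lia) Hi) as E. rewrite bdf2_1_0, bdf2_1_1 in E.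
  rewrite <- E. field. lra.
Qed.

Lemma nphi_1_le : (1 <= N)%nat -> tau t 1 * Rabs c3 <= 1 / 16 -> tau t 1 * CJ <= 1 / 20 ->
  nphi 1 <= 2 * nphi 0 + 3 * tau t 1 * nrm h M (zeta 1%nat).
Proof.
  intros HN Hc3 HcJ. pose proof (tau_pos t N Hinc 1 ltac:(lia)) as T1. pose proof h_pos as Hh.
  pose proof (ip_dphi_1 (phi 1%nat) HN) as E.
  rewrite ip_lapl, ip_grad_self in E by (auto; try lia; apply Hphi; lia).
  rewrite (ip_ext h M (dphi 1) (fun i => 1 * phi 1%nat i + (-1) * phi 0%nat i) (phi 1%nat) (phi 1%nat))
    in E by (intros; split; [unfold dphi; simpl; ring | reflexivity]).
  rewrite ip_lin, <- !(nrm_sqr h M Hh) in E.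
  pose proof (ip_le h M Hh (phi 0%nat) (phi 1%nat)).
  pose proof (ip_le h M Hh (rhs 1) (phi 1%nat)).
  pose proof (nrm_rhs_le 1 HN) as Hr. change (nrm h M (Ephi t phi 1)) with (nphi 0) in Hr.
  pose proof (aform_nonneg h M Hh ltac:(lia) (phi 1%nat) (Hphi 1 HN)).
  pose proof (nphi_nonneg 1). pose proof (nphi_nonneg 0). pose proof (nrm_nonneg h M (zeta 1%nat)).
  fold (nphi 1) (nphi 0) in *.
  set (n1 := nphi 1) in *. set (n0 := nphi 0) in *. set (z := nrm h M (zeta 1%nat)) in *.
  assert (- c3 * (n1 * n1) <= Rabs c3 * (n1 * n1)) by (apply neg_mul_le_abs; rewrite Rabs_right; nra).
  assert (Hin : n1 * n1 - n0 * n1 <= tau t 1 * ((z + CJ * n0) * n1 + Rabs c3 * (n1 * n1))).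
  { assert (ip h M (rhs 1) (phi 1%nat) <= (z + CJ * n0) * n1).
    { eapply Rle_trans; [eassumption|]. apply Rmult_le_compat_r; auto. }
    assert (tau t 1 * (ip h M (rhs 1) (phi 1%nat) + c1 * - aform h M (phi 1%nat) (phi 1%nat) - c2 * 0
                       - c3 * (n1 * n1)) <= tau t 1 * ((z + CJ * n0) * n1 + Rabs c3 * (n1 * n1)))
      by (apply Rmult_le_compat_l; nra).
    lra. }
  destruct (Req_dec n1 0) as [->|Hn1]; [nra|].
  assert (n1 - n0 <= tau t 1 * (z + CJ * n0) + tau t 1 * Rabs c3 * n1)
    by (apply Rmult_le_reg_r with n1; nra).
  nra.
Qed.

Definition a00 : R := aform h M (phi 0%nat) (phi 0%nat).

(* H1 estimate of the first step: test it with [- lapl h (phi 1)]. *)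
Lemma a11_le : (1 <= N)%nat -> tau t 1 * (c2 ^ 2 / (2 * c1) + Rabs c3) <= 1 / 4 ->
  a11 <= 2 * a00 + 2 * tau t 1 * (nrm h M (rhs 1) * nrm h M (rhs 1)) / c1.
Proof.
  intros HN Hsmall. pose proof (tau_pos t N Hinc 1 ltac:(lia)) as T1. pose proof h_pos as Hh.
  assert (V0 : in_Vh M (phi 0%nat)) by (apply Hphi; lia).
  assert (V1 : in_Vh M (phi 1%nat)) by (apply Hphi; lia).
  set (w := fun i => - lapl h (phi 1%nat) i).
  pose proof (ip_dphi_1 w HN) as E.
  assert (E1 : ip h M (dphi 1) w = a11 - aform h M (phi 1%nat) (phi 0%nat)).
  { rewrite (ip_ext h M (dphi 1) (fun i => 1 * phi 1%nat i + (-1) * phi 0%nat i) w w)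
      by (intros; split; [unfold dphi; simpl; ring | reflexivity]).
    rewrite ip_lin. unfold a11, aform, w. rewrite !(ip_sym h M _ (fun i => - lapl h (phi 1%nat) i)). ring. }
  assert (E2 : ip h M (lapl h (phi 1%nat)) w = - (nrm h M w * nrm h M w)).
  { rewrite (nrm_sqr h M Hh). replace (- ip h M w w) with (-1 * ip h M w w) by ring.
    rewrite <- ip_scal. apply ip_ext. intros. split; [unfold w; ring | reflexivity]. }
  assert (E3 : ip h M (phi 1%nat) w = a11) by (unfold a11, aform, w; apply ip_sym).
  rewrite E1, E2, E3 in E.
  set (Y := semi1 h M (phi 1%nat)). set (Z := semi1 h M (phi 0%nat)).
  set (W := nrm h M w). set (F := nrm h M (rhs 1)).
  assert (HY : Y * Y = a11) by (apply semi1_sqr; auto).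
  assert (HZ : Z * Z = a00) by (apply semi1_sqr; auto).
  assert (B1 : aform h M (phi 1%nat) (phi 0%nat) <= Y * Z).
  { pose proof (Rabs_aform_le h M Hh ltac:(lia) _ _ V1 V0).
    pose proof (Rle_abs (aform h M (phi 1%nat) (phi 0%nat))). unfold Y, Z, semi1.
    fold (aform h M (phi 1%nat) (phi 1%nat)) (aform h M (phi 0%nat) (phi 0%nat)). lra. }
  assert (B2 : ip h M (rhs 1) w <= F * W) by apply (ip_le h M Hh).
  assert (B3 : - c2 * ip h M (grad h (phi 1%nat)) w <= Rabs c2 * (Y * W)).
  { apply neg_mul_le_abs. eapply Rle_trans; [apply (Rabs_ip_le h M Hh)|].
    apply Rmult_le_compat_r; [apply nrm_nonneg | apply sqrt_le_1_alt, ip_grad_le_aform; auto; lia]. }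
  assert (B4 : - c3 * a11 <= Rabs c3 * a11)
    by (apply neg_mul_le_abs; rewrite Rabs_right; [lra | apply Rle_ge, a11_nonneg; lia]).
  rewrite <- HY, <- HZ.
  apply sqr_le_of_energy_step with (W := W) (c2 := c2) (c3 := c3);
    auto; try lra; try apply sqrt_pos; try apply nrm_nonneg.
  assert (tau t 1 * (ip h M (rhs 1) w + c1 * - (W * W) - c2 * ip h M (grad h (phi 1%nat)) w - c3 * a11)
          <= tau t 1 * (F * W - c1 * (W * W) + Rabs c2 * (Y * W) + Rabs c3 * a11)) by (apply Rmult_le_compat_l; lra).
  fold W in E. rewrite HY. lra.
Qed.

Lemma nphi_le_gronwall n T : t 0%nat = 0 -> (2 <= n <= N)%nat ->
  (forall k, (1 <= k <= N)%nat -> tau t k <= T) -> T * C1 <= 1 / 2 ->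
  nphi n <= 2 * source_level n * exp (2 * C1 * t (n - 1)%nat).
Proof.
  intros Ht0 Hn HT HTC.
  assert (HC1 : 0 <= C1) by (rewrite C1_eq; pose proof lam_nonneg; nra).
  pose proof (discrete_gronwall nphi_max (tau t) (source_level n) C1 n (source_level_nonneg n ltac:(lia)) HC1) as G.
  assert (Ht : forall k, (1 <= k <= n)%nat -> 0 <= tau t k /\ C1 * tau t k <= 1 / 2).
  { intros. pose proof (tau_pos t N Hinc k ltac:(lia)). pose proof (HT k ltac:(lia)). split; nra. }
  specialize (G Ht (fun k _ => nphi_max_nonneg k)
                (fun m Hm => nphi_max_le_sources m n ltac:(lia) ltac:(lia) ltac:(lia)) (n - 1)%nat ltac:(lia)).
  replace (S (n - 1)) with n in G by lia.
  rewrite (sumR_tau t N), Ht0, Rminus_0_r in G by lia.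
  pose proof (nphi_le_max n n ltac:(lia)). lra.
Qed.

Lemma start_level_le : (2 <= N)%nat -> tau t 1 * (c2 ^ 2 / (2 * c1) + Rabs c3) <= 1 / 4 ->
  start_level <= nphi 0 + 2 * tau t 1 * nrm h M (rhs 1) * sqrt nu + sqrt (4 * c1 * nu * tau t 1 * a00).
Proof.
  intros HN Hsmall. pose proof (tau_pos t N Hinc 1 ltac:(lia)) as T1.
  pose proof (form_nu_nonneg t N Hinc rmax Hrmax_pos Hrmax_root delta Hdelta HN) as Hnu. fold nu in Hnu.
  pose proof (aform_nonneg h M h_pos ltac:(lia) (phi 0%nat) (Hphi 0 ltac:(lia))) as A00. fold a00 in A00.
  pose proof (a11_le ltac:(lia) Hsmall) as Ha11.
  set (F := nrm h M (rhs 1)) in *. pose proof (nrm_nonneg h M (rhs 1)). fold F in H.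
  pose proof (nphi_nonneg 0).
  assert (Q : 2 * c1 * nu * tau t 1 * a11 <= 4 * c1 * nu * tau t 1 * a00 + 4 * nu * (tau t 1 * tau t 1) * (F * F)).
  { apply Rmult_le_compat_l with (r := 2 * c1 * nu * tau t 1) in Ha11;
      [|apply Rmult_le_pos; [apply Rmult_le_pos|]; nra].
    replace (2 * c1 * nu * tau t 1 * (2 * a00 + 2 * tau t 1 * (F * F) / c1))
      with (4 * c1 * nu * tau t 1 * a00 + 4 * nu * (tau t 1 * tau t 1) * (F * F)) in Ha11 by (field; lra).
    exact Ha11. }
  assert (0 <= 4 * c1 * nu * tau t 1 * a00) by (apply Rmult_le_pos; [apply Rmult_le_pos|]; nra).
  assert (0 <= 4 * nu * (tau t 1 * tau t 1) * (F * F)) by (apply Rmult_le_pos; nra).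
  unfold start_level. eapply Rle_trans; [apply sqrt_le_1_alt, Rplus_le_compat_l, Q|].
  eapply Rle_trans; [apply sqrt_add_le; nra|]. rewrite sqrt_square by auto.
  eapply Rle_trans; [apply Rplus_le_compat_l, sqrt_add_le; auto|].
  assert (sqrt (4 * nu * (tau t 1 * tau t 1) * (F * F)) <= 2 * tau t 1 * F * sqrt nu).
  { pose proof (sqrt_pos nu).
    apply sqrt_le_of_le_sqr; [apply Rmult_le_pos; [apply Rmult_le_pos|]; lra|].
    right. replace (2 * tau t 1 * F * sqrt nu * (2 * tau t 1 * F * sqrt nu))
      with (4 * (tau t 1 * tau t 1) * (F * F) * (sqrt nu * sqrt nu)) by ring.
    rewrite sqrt_sqrt by lra. ring. }
  lra.
Qed.

Variable p : nat -> nat -> R.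
Hypothesis Hp : is_DCC t N p.

Lemma sumR_Zconv n : (1 <= n <= N)%nat ->
  sumR 1 n Zconv = sumR 1 n (fun k => p n (n - k)%nat * nrm h M (zeta k)).
Proof. intros. apply (sumR_bdf2_inv t N Hinc p Hp). lia. Qed.

Lemma sumR_Econv n : (2 <= n <= N)%nat ->
  sumR 1 n Econv = p n (n - 1)%nat * nphi 0 + p n (n - 2)%nat * nrm h M (Ephi t phi 2).
Proof.
  intros Hn. unfold Econv. rewrite (sumR_bdf2_inv t N Hinc p Hp) by lia.
  rewrite sumR_recl, sumR_recl, sumR_zero by (try lia; intros i Hi; unfold Ehead;
    destruct (Nat.eqb_spec i 1), (Nat.eqb_spec i 2); try lia; ring).
  unfold Ehead. simpl. ring.
Qed.

Lemma start_rhs_term_le n T : (2 <= n <= N)%nat -> (forall k, (1 <= k <= N)%nat -> tau t k <= T) ->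
  T * CJ <= 1 / 20 ->
  2 * tau t 1 * nrm h M (rhs 1) * sqrt nu
  <= 5 * sumR 1 n (fun k => p n (n - k)%nat * nrm h M (zeta k)) + (1 + ratio t 2) / 4 * nphi 0.
Proof.
  intros Hn HT HTJ.
  pose proof (tau_pos t N Hinc 1 ltac:(lia)) as T1. pose proof (HT 1%nat ltac:(lia)).
  pose proof (ratio_pos t N Hinc 2 ltac:(lia)) as R2.
  pose proof (form_nu_nonneg t N Hinc rmax Hrmax_pos Hrmax_root delta Hdelta ltac:(lia)) as Hnu0.
  pose proof (form_nu_le t N Hinc rmax Hrmax_pos Hrmax_root delta Hdelta ltac:(lia)) as Hnu1. fold nu in Hnu0, Hnu1.
  pose proof (two_sqrt_nu_le (ratio t 2) nu rmax R2 (conj Hnu0 Hnu1)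
                ltac:(pose proof (rmax_bounds rmax Hrmax_pos Hrmax_root); lra)) as Hsnu.
  pose proof (dcc_kernel_first_ge t N Hinc p Hp n Hn) as HP1. rewrite (eta_2 t N Hinc) in HP1 by lia.
  pose proof (nrm_rhs_le 1 ltac:(lia)) as HF. change (nrm h M (Ephi t phi 1)) with (nphi 0) in HF.
  set (e2 := ratio t 2 ^ 2 / (1 + 2 * ratio t 2)) in *.
  assert (He2 : 0 <= e2 <= ratio t 2).
  { unfold e2. split; [apply Rmult_le_pos; [apply pow2_ge_0 | left; apply Rinv_0_lt_compat; lra]|].
    apply Rmult_le_reg_r with (1 + 2 * ratio t 2); [lra|]. unfold Rdiv.
    rewrite Rmult_assoc, Rinv_l by lra. nra. }
  set (P1 := p n (n - 1)%nat) in *. set (z1 := nrm h M (zeta 1%nat)).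
  assert (HZ : P1 * z1 <= sumR 1 n (fun k => p n (n - k)%nat * nrm h M (zeta k))).
  { rewrite sumR_recl by lia.
    assert (0 <= sumR 2 n (fun k => p n (n - k)%nat * nrm h M (zeta k))).
    { apply sumR_nonneg. intros.
      apply Rmult_le_pos; [apply (dcc_kernel_nonneg t N Hinc p Hp); lia | apply nrm_nonneg]. }
    unfold P1, z1. lra. }
  pose proof (sqrt_pos nu). pose proof (nrm_nonneg h M (zeta 1%nat)). pose proof (nphi_nonneg 0).
  fold z1 in H1.
  assert (2 * tau t 1 * nrm h M (rhs 1) * sqrt nu <= tau t 1 * (2 * sqrt nu) * (z1 + CJ * nphi 0)).
  { replace (2 * tau t 1 * nrm h M (rhs 1) * sqrt nu) with (tau t 1 * (2 * sqrt nu) * nrm h M (rhs 1)) by ring.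
    apply Rmult_le_compat_l; [nra | exact HF]. }
  assert (tau t 1 * (2 * sqrt nu) <= 5 * P1) by nra.
  assert (tau t 1 * CJ <= 1 / 20) by nra.
  assert (tau t 1 * (2 * sqrt nu) * z1 <= 5 * P1 * z1) by (apply Rmult_le_compat_r; lra).
  assert ((tau t 1 * CJ) * (2 * sqrt nu) <= 1 / 20 * (5 * (1 + e2)))
    by (apply Rmult_le_compat; [apply Rmult_le_pos | | |]; lra).
  assert ((tau t 1 * CJ) * (2 * sqrt nu) * nphi 0 <= 1 / 20 * (5 * (1 + e2)) * nphi 0)
    by (apply Rmult_le_compat_r; lra).
  nra.
Qed.

Lemma start_extrap_term_le n T : (2 <= n <= N)%nat -> (forall k, (1 <= k <= N)%nat -> tau t k <= T) ->
  T * CJ <= 1 / 20 -> T * Rabs c3 <= 1 / 16 ->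
  2 * CJ * (p n (n - 2)%nat * nrm h M (Ephi t phi 2))
  <= 0.2 * (2 + 3 * ratio t 2) * nphi 0
     + 6 * p n (n - 2)%nat * CJ * (tau t 1 + tau t 2) * nrm h M (zeta 1%nat).
Proof.
  intros Hn HT HTJ HT3.
  pose proof (tau_pos t N Hinc 1 ltac:(lia)). pose proof (HT 1%nat ltac:(lia)).
  pose proof (ratio_pos t N Hinc 2 ltac:(lia)) as R2.
  pose proof (nrm_Ephi_2 ltac:(lia)) as HE.
  pose proof (nphi_1_le ltac:(lia) ltac:(nra) ltac:(nra)) as H1.
  pose proof (dcc_kernel_nonneg t N Hinc p Hp n 2 ltac:(lia) ltac:(lia)) as HP0.
  pose proof (dcc_kernel_le t N Hinc p Hp T HT n 2 ltac:(lia) ltac:(lia)) as HP.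
  pose proof (tau_ratio t N Hinc 2 ltac:(lia)) as Htau2. simpl in Htau2.
  pose proof (nphi_nonneg 0). pose proof (nrm_nonneg h M (zeta 1%nat)).
  set (P2 := p n (n - 2)%nat) in *. set (z1 := nrm h M (zeta 1%nat)) in *.
  assert (HE' : nrm h M (Ephi t phi 2) <= (2 + 3 * ratio t 2) * nphi 0 + 3 * (1 + ratio t 2) * tau t 1 * z1).
  { assert ((1 + ratio t 2) * nphi 1 <= (1 + ratio t 2) * (2 * nphi 0 + 3 * tau t 1 * z1))
      by (apply Rmult_le_compat_l; lra).
    lra. }
  assert (HCP : 0 <= CJ * P2 <= 0.1) by (split; nra).
  assert (2 * (CJ * P2) * ((2 + 3 * ratio t 2) * nphi 0) <= 0.2 * ((2 + 3 * ratio t 2) * nphi 0))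
    by (apply Rmult_le_compat_r; [apply Rmult_le_pos|]; lra).
  assert (2 * CJ * (P2 * nrm h M (Ephi t phi 2))
          <= 2 * (CJ * P2) * ((2 + 3 * ratio t 2) * nphi 0 + 3 * (1 + ratio t 2) * tau t 1 * z1)).
  { replace (2 * CJ * (P2 * nrm h M (Ephi t phi 2))) with (2 * (CJ * P2) * nrm h M (Ephi t phi 2)) by ring.
    apply Rmult_le_compat_l; lra. }
  rewrite Htau2. nra.
Qed.

Lemma source_level_le n T : (2 <= n <= N)%nat -> (forall k, (1 <= k <= N)%nat -> tau t k <= T) ->
  T * CJ <= 1 / 20 -> T * Rabs c3 <= 1 / 16 -> tau t 1 * (c2 ^ 2 / (2 * c1) + Rabs c3) <= 1 / 4 ->
  source_level n <= (3 + ratio t 2) * nphi 0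
            + 6 * p n (n - 2)%nat * CJ * (tau t 1 + tau t 2) * nrm h M (zeta 1%nat)
            + 4 * (rmax ^ 2 * sqrt rmax) / delta * sqrt (c1 * ratio t 2) * sqrt T * semi1 h M (phi 0%nat)
            + 7 * sumR 1 n (fun k => p n (n - k)%nat * nrm h M (zeta k)).
Proof.
  intros Hn HT HTJ HT3 Hsmall.
  pose proof (tau_pos t N Hinc 1 ltac:(lia)). pose proof (HT 1%nat ltac:(lia)).
  pose proof (ratio_pos t N Hinc 2 ltac:(lia)) as R2.
  pose proof (start_level_le ltac:(lia) Hsmall) as HS.
  pose proof (start_rhs_term_le n T Hn HT HTJ).
  pose proof (start_extrap_term_le n T Hn HT HTJ HT3).
  pose proof (form_nu_nonneg t N Hinc rmax Hrmax_pos Hrmax_root delta Hdelta ltac:(lia)) as Hnu0.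
  pose proof (form_nu_le t N Hinc rmax Hrmax_pos Hrmax_root delta Hdelta ltac:(lia)) as Hnu1. fold nu in Hnu0, Hnu1.
  pose proof (sqrt_start_term_le c1 nu (tau t 1) T (semi1 h M (phi 0%nat)) (ratio t 2) rmax delta Hc1 R2
                (conj Hnu0 Hnu1) ltac:(lra) (sqrt_pos _)
                ltac:(pose proof (rmax_bounds rmax Hrmax_pos Hrmax_root); lra) Hdelta) as HC2.
  rewrite semi1_sqr in HC2 by (apply Hphi; lia). fold a00 in HC2.
  pose proof (dcc_kernel_le t N Hinc p Hp T HT n 1 ltac:(lia) ltac:(lia)) as HP1.
  pose proof (dcc_kernel_nonneg t N Hinc p Hp n 1 ltac:(lia) ltac:(lia)) as HP10.
  pose proof (nphi_nonneg 0).
  assert (2 * (CJ * (p n (n - 1)%nat * nphi 0)) <= 0.2 * nphi 0).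
  { assert (CJ * p n (n - 1)%nat <= 0.1) by nra. nra. }
  assert (0 <= ratio t 2 * nphi 0) by (apply Rmult_le_pos; lra).
  unfold source_level. rewrite sumR_plus, sumR_scal, sumR_Zconv, sumR_Econv by lia.
  lra.
Qed.

Lemma tau_le_taumax k : (1 <= k <= N)%nat -> tau t k <= taumax t N.
Proof. intros. apply maxR_ge. lia. Qed.

Lemma nphi_bound n : t 0%nat = 0 -> (2 <= n <= N)%nat ->
  taumax t N <= 1 / (2 * C1) ->
  taumax t N <= 1 / (2 * (c2 ^ 2 / c1 + 4 * Rabs c3 + 2 * CJ)) ->
  taumax t N <= 1 / (4 * (5 * CJ + 4 * Rabs c3)) ->
  nphi n <= 2 * exp (2 * C1 * t (n - 1)%nat)
            * ((3 + ratio t 2) * nphi 0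
               + 6 * p n (n - 2)%nat * CJ * (tau t 1 + tau t 2) * nrm h M (zeta 1%nat)
               + 4 * (rmax ^ 2 * sqrt rmax) / delta * sqrt (c1 * ratio t 2) * sqrt (taumax t N)
                 * semi1 h M (phi 0%nat)
               + 7 * sumR 1 n (fun k => p n (n - k)%nat * nrm h M (zeta k))).
Proof.
  intros Ht0 Hn H1 H2 H3.
  pose proof (Rabs_pos c3). pose proof (Cr_pos rmax Hrmax_pos).
  assert (0 <= c2 ^ 2 / c1) by (apply Rmult_le_pos; [apply pow2_ge_0 | left; apply Rinv_0_lt_compat; lra]).
  assert (0 <= c2 ^ 2 / (c1 * Cr rmax * delta))
    by (apply Rmult_le_pos; [apply pow2_ge_0 | left; apply Rinv_0_lt_compat; apply Rmult_lt_0_compat; nra]).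
  pose proof (le_div_mul_le (taumax t N) (2 * C1) ltac:(unfold C1; nra) H1).
  pose proof (le_div_mul_le (taumax t N) (2 * (c2 ^ 2 / c1 + 4 * Rabs c3 + 2 * CJ)) ltac:(lra) H2).
  pose proof (le_div_mul_le (taumax t N) (4 * (5 * CJ + 4 * Rabs c3)) ltac:(lra) H3).
  pose proof (tau_le_taumax 1 ltac:(lia)). pose proof (tau_pos t N Hinc 1 ltac:(lia)).
  assert (c2 ^ 2 / (2 * c1) = c2 ^ 2 / c1 / 2) by (field; lra).
  pose proof (source_level_le n (taumax t N) Hn tau_le_taumax ltac:(nra) ltac:(nra) ltac:(nra)).
  pose proof (nphi_le_gronwall n (taumax t N) Ht0 Hn tau_le_taumax ltac:(nra)).
  pose proof (exp_pos (2 * C1 * t (n - 1)%nat)).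
  nra.
Qed.

Lemma nphi_1_bound : t 0%nat = 0 -> (1 <= N)%nat -> taumax t N <= 1 / (4 * (5 * CJ + 4 * Rabs c3)) ->
  nphi 1 <= 2 * nphi 0 + 3 * t 1%nat * nrm h M (zeta 1%nat).
Proof.
  intros Ht0 HN H3. pose proof (Rabs_pos c3).
  pose proof (le_div_mul_le (taumax t N) (4 * (5 * CJ + 4 * Rabs c3)) ltac:(lra) H3).
  pose proof (tau_le_taumax 1 ltac:(lia)). pose proof (tau_pos t N Hinc 1 ltac:(lia)).
  replace (t 1%nat) with (tau t 1) by (unfold tau; simpl; rewrite Ht0; ring).
  apply nphi_1_le; [lia | nra | nra].
Qed.

End Scheme.

Theorem mainTheorem1
  (N : nat) (t : nat -> R)
  (Ht0 : t 0%nat = 0)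
  (Hinc : forall k : nat, (1 <= k <= N)%nat -> t (k - 1)%nat < t k)
  (rmax : R) (Hrmax_pos : 0 < rmax) (Hrmax_root : rmax ^ 3 = (2 * rmax + 1) ^ 2)
  (delta : R) (Hdelta : 0 < delta < rmax)
  (Hr2 : (2 <= N)%nat -> 0 < ratio t 2)
  (Hrk : forall k : nat, (3 <= k <= N)%nat -> 0 < ratio t k <= rmax - delta)
  (p : nat -> nat -> R) (Hp : is_DCC t N p)
  (M : nat) (HM : (2 <= M)%nat) (xl xr : R) (Hx : xl < xr)
  (c1 c2 c3 : R) (Hc1 : 0 < c1)
  (rho : R -> R) (Hrho : exists B : R, forall z : R, Rabs (rho z) <= B)
  (CJ : R) (HCJ : 0 < CJ)
  (HJ : forall v : nat -> R, in_Vh M v ->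
          nrm (hstep xl xr M) M (Jh rho xl xr M v) <= CJ * nrm (hstep xl xr M) M v)
  (phi zeta : nat -> nat -> R)
  (Hphi : forall n : nat, (n <= N)%nat -> in_Vh M (phi n))
  (Hscheme : forall n i : nat, (1 <= n <= N)%nat -> (1 <= i <= M - 1)%nat ->
     sumR 1 n (fun k => bdf2 t n (n - k)%nat * (phi k i - phi (k - 1)%nat i))
     - c1 * lapl (hstep xl xr M) (phi n) i
     + c2 * grad (hstep xl xr M) (phi n) i
     + c3 * phi n i
     + Jh rho xl xr M (Ephi t phi n) i
     = zeta n i) :
  let h := hstep xl xr M in
  let tau_ := taumax t N in
  let Cr := sqrt rmax / (1 + rmax) ^ 2 in
  let cr := rmax ^ 2 * sqrt rmax in
  let C1 := c2 ^ 2 / (c1 * Cr * delta) + 2 * Rabs c3 + 2 * CJ * (1 + 2 * rmax) in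
  let C2 := 4 * cr / delta * sqrt (c1 * ratio t 2) in
  tau_ <= 1 / (2 * C1) ->
  tau_ <= 1 / (2 * (c2 ^ 2 / c1 + 4 * Rabs c3 + 2 * CJ)) ->
  tau_ <= 1 / (4 * (5 * CJ + 4 * Rabs c3)) ->
  (forall n : nat, (2 <= n <= N)%nat ->
     let common := (3 + ratio t 2) * nrm h M (phi 0%nat)
                   + 6 * p n (n - 2)%nat * CJ * (tau t 1 + tau t 2) * nrm h M (zeta 1%nat)
                   + C2 * sqrt tau_ * semi1 h M (phi 0%nat) in
     nrm h M (phi n)
       <= 2 * exp (2 * C1 * t (n - 1)%nat)
            * (common + 7 * sumR 1 n (fun k => p n (n - k)%nat * nrm h M (zeta k)))
     /\ 2 * exp (2 * C1 * t (n - 1)%nat)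
            * (common + 7 * sumR 1 n (fun k => p n (n - k)%nat * nrm h M (zeta k)))
        <= 2 * exp (2 * C1 * t (n - 1)%nat)
            * (common + 7 * t n * maxR 1 n (fun k => nrm h M (zeta k))))
  /\ ((1 <= N)%nat ->
      nrm h M (phi 1%nat) <= 2 * nrm h M (phi 0%nat) + 3 * t 1%nat * nrm h M (zeta 1%nat)).
Proof.
  (* [Hr2] follows from [Hinc], and the kernel bound [Hrho] enters only through [HJ]. *)
  intros h tau_ Cr' cr C1' C2 H1 H2 H3.
  split.
  - intros n Hn common. split.
    + exact (nphi_bound N t Hinc M HM xl xr Hx c1 c2 c3 Hc1 rho CJ HCJ HJ phi zeta Hphi Hscheme
               rmax Hrmax_pos Hrmax_root delta Hdelta Hrk p Hp n Ht0 Hn H1 H2 H3).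
    + pose proof (dcc_weighted_sum_le t N Hinc p Hp (fun k => nrm h M (zeta k)) n ltac:(lia)) as Hsum.
      rewrite Ht0, Rminus_0_r in Hsum.
      apply Rmult_le_compat_l; [pose proof (exp_pos (2 * C1' * t (n - 1)%nat)); lra | lra].
  - intros HN.
    exact (nphi_1_bound N t Hinc M HM xl xr Hx c1 c2 c3 Hc1 rho CJ HCJ HJ phi zeta Hphi Hscheme
             Ht0 HN H3).
Qed.
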